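(* Let $G(\mathcal Y)$ and $G'(\mathcal Y')$ be developable complexes of groups over connected scwols $\mathcal Y$ and $\mathcal Y'$, and choose maximal trees $T$ and $T'$ in $\mathcal Y$ and $\mathcal Y'$. Suppose $L:D(\mathcal Y,T)\to D(\mathcal Y',T')$ is a morphism of scwols which is equivariant with respect to a group homomorphism $\Lambda:\pi_1(G(\mathcal Y),T)\to\pi_1(G'(\mathcal Y'),T')$. If there are $\sigma_0\in V(\mathcal Y)$ and $\sigma_0'\in V(\mathcal Y')$ with $L([1],\sigma_0)=([1],\sigma_0')$, then there exists a morphism of complexes of groups $\lambda:G(\mathcal Y)\to G'(\mathcal Y')$ (over a morphism $l$ with $l(\sigma_0)=\sigma_0'$) such that, using basepoints $\sigma_0$ and $\sigma_0'$, $L=L^\lambda_{T,T'}$ and $\Lambda=\Lambda^\lambda_{T,T'}$.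
   Context: Scwols. A scwol $\mathcal X$ consists of a set $V(\mathcal X)$ of vertices, a set $E(\mathcal X)$ of edges, maps $i,t:E(\mathcal X)\to V(\mathcal X)$, and a composition $(a,b)\mapsto ab\in E(\mathcal X)$ defined on $E^{(2)}(\mathcal X)=\{(a,b): i(a)=t(b)\}$, such that $i(ab)=i(b)$, $t(ab)=t(a)$, $(ab)c=a(bc)$ whenever defined, and $i(a)\neq t(a)$ for all $a$. For a vertex $\alpha$ put $i(\alpha)=t(\alpha)=\alpha$; ''$\alpha\in\mathcal X$'' means $\alpha\in V(\mathcal X)\sqcup E(\mathcal X)$. The geometric realization $|\mathcal X|$ has one $k$-simplex for each sequence of $k$ composable edges; $\mathcal X$ is connected if $|\mathcal X|$ is. A maximal tree in $\mathcal X$ means a maximal tree in the 1-skeleton of $|\mathcal X|$. A morphism of scwols sends vertices to vertices and edges to edges and commutes with $i$, $t$ and composition. Complexes of groups. A complex of groups $G(\mathcal Y)=(G_\sigma,\psi_a,g_{a,b})$ over $\mathcal Y$ consists of groups $G_\sigma$, injective homomorphisms $\psi_a:G_{i(a)}\to G_{t(a)}$ and elements $g_{a,b}\in G_{t(a)}$ ($(a,b)\in E^{(2)}(\mathcal Y)$) with $\mathrm{Ad}(g_{a,b})\psi_{ab}=\psi_a\psi_b$ and $\psi_a(g_{b,c})g_{a,bc}=g_{a,b}g_{ab,c}$. A morphism $\phi=(\phi_\sigma,\phi(a)):G(\mathcal Y)\to G'(\mathcal Y')$ over a morphism of scwols $l$ consists of homomorphisms $\phi_\sigma:G_\sigma\to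 G'_{l(\sigma)}$ and elements $\phi(a)\in G'_{t(l(a))}$ with $\mathrm{Ad}(\phi(a))\psi'_{l(a)}\phi_{i(a)}=\phi_{t(a)}\psi_a$ and $\phi_{t(a)}(g_{a,b})\phi(ab)=\phi(a)\psi'_{l(a)}(\phi(b))g'_{l(a),l(b)}$. A complex of groups is developable if it is isomorphic to the complex of groups associated to some action of a group $G$ on a scwol $\mathcal X$ (local groups the stabilizers of chosen lifts $\bar\sigma$ of vertices of $\mathcal Y=G\backslash\mathcal X$, $\psi_a=\mathrm{Ad}(h_a)$, $g_{a,b}=h_ah_bh_{ab}^{-1}$ for chosen $h_a\in G$ with $h_a\cdot t(\bar a)=\overline{t(a)}$, $\bar a$ the lift of $a$ with $i(\bar a)=\overline{i(a)}$). Fundamental group and universal cover. The universal group $FG(\mathcal Y)$ is generated by $\bigsqcup_\sigma G_\sigma$ and symbols $a^+,a^-$ ($a\in E(\mathcal Y)$) subject to: the relations of each $G_\sigma$; $(a^\pm)^{-1}=a^\mp$; $a^+b^+=g_{a,b}(ab)^+$; $\psi_a(g)=a^+ga^-$ for $g\in G_{i(a)}$. $\pi_1(G(\mathcal Y),T)$ is the quotient of $FG(\mathcal Y)$ by $a^+=1$ for $a$ in $T$; $\iota_T$ sends $g\in G_\sigma$ to its image and $a$ to the image of $a^+$. The universal cover $D(\mathcal Y,T)$ has vertices $([g],\sigma)$, $[g]\in\pi_1(G(\mathcal Y),T)/\iota_T(G_\sigma)$, edges $([g],a)$, $[g]\in\pi_1(G(\mathcal Y),T)/\iota_T(G_{i(a)})$,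 $i([g],a)=([g],i(a))$, $t([g],a)=([g\,\iota_T(a)^{-1}],t(a))$, $([g],a)([h],b)=([h],ab)$ when $g^{-1}h\,\iota_T(b)^{-1}\in\iota_T(G_{i(a)})$; $\pi_1(G(\mathcal Y),T)$ acts by left multiplication. Induced maps. For a morphism $\lambda$ over $l$ with basepoint $\sigma_0\in V(\mathcal Y)$, $\sigma_0'=l(\sigma_0)$: oriented edges satisfy $i(a^+)=t(a)$, $t(a^+)=i(a)$, $i(a^-)=i(a)$, $t(a^-)=t(a)$. For $\sigma\in V(\mathcal Y)$ let $(e_1,\dots,e_n)$ be the unique edge path of oriented edges in $T$ without backtracking from $\sigma_0$ to $\sigma$ and $\pi_\sigma=e_1\cdots e_n\in FG(\mathcal Y)$; define $\pi'_{\sigma'}$ likewise. The homomorphism $\kappa_T:\pi_1(G(\mathcal Y),T)\to FG(\mathcal Y)$, $g\mapsto\pi_\sigma g\pi_\sigma^{-1}$ ($g\in G_\sigma$), $a^+\mapsto\pi_{t(a)}a^+\pi_{i(a)}^{-1}$, is an isomorphism onto the subgroup $\pi_1(G(\mathcal Y),\sigma_0)$ of elements represented by words $g_0e_1g_1\cdots e_ng_n$ with $(e_1,\dots,e_n)$ an edge path from $\sigma_0$ to $\sigma_0$, $g_0\in G_{\sigma_0}$, $g_j\in G_{t(e_j)}$; similarly $\kappa'_{T'}$. Let $F\lambda:FG(\mathcal Y)\to FG'(\mathcal Y')$ be $g\mapsto\lambda_\sigma(g)$, $a^+\mapsto\lambda(a)\,l(a)^+$. Define $\Lambda^\lambda_{T,T'}=\kappa'^{-1}_{T'}\circ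 F\lambda\circ\kappa_T$, $u_\sigma=\kappa'^{-1}_{T'}(F\lambda(\pi_\sigma)\,\pi'^{-1}_{l(\sigma)})$, and $L^\lambda_{T,T'}:D(\mathcal Y,T)\to D(\mathcal Y',T')$, $([g],\alpha)\mapsto([\Lambda^\lambda_{T,T'}(g)u_{i(\alpha)}],l(\alpha))$. *)

From Stdlib Require Import List Relations ClassicalEpsilon.
Import ListNotations.
Set Implicit Arguments.
Unset Strict Implicit.

Definition quot {T : Type} (R : T -> T -> Prop) : Type :=
  {P : T -> Prop | exists x, P = R x}.

Definition cls {T : Type} (R : T -> T -> Prop) (x : T) : quot R :=
  exist (fun P => exists y, P = R y) (R x) (ex_intro (fun y => R x = R y) x eq_refl).

Definition rep {T : Type} {R : T -> T -> Prop} (q : quot R) : T :=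
  proj1_sig (constructive_indefinite_description _ (proj2_sig q)).

(* "the element satisfying P" (any one if several, default if none) *)
Definition choose {A : Type} (a : A) (P : A -> Prop) : A := epsilon (inhabits a) P.

Record grp := Grp { gcar :> Type; gop : gcar -> gcar -> gcar; gid : gcar; ginvg : gcar -> gcar }.
Arguments gop : clear implicits.
Arguments gid : clear implicits.
Arguments ginvg : clear implicits.

Definition is_grp (G : grp) : Prop :=
  (forall x y z, gop G (gop G x y) z = gop G x (gop G y z)) /\
  (forall x, gop G (gid G) x = x /\ gop G x (gid G) = x) /\
  (forall x, gop G (ginvg G x) x = gid G /\ gop G x (ginvg G x) = gid G).

(* Scwols.  Composition is a total function; only its values on
   composable pairs (ini a = ter b) are meaningful.                    *)

Record scwol := Scwol {
  V : Type; E : Type;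
  ini : E -> V; ter : E -> V;
  cmp : E -> E -> E }.
Arguments ini {s} _.
Arguments ter {s} _.
Arguments cmp {s} _ _.

Definition composable (X : scwol) (a b : E X) : Prop := ini a = ter b.

Definition is_scwol (X : scwol) : Prop :=
  (forall a b : E X, composable a b -> ini (cmp a b) = ini b /\ ter (cmp a b) = ter a) /\
  (forall a b c : E X, composable a b -> composable b c ->
       cmp (cmp a b) c = cmp a (cmp b c)) /\
  (forall a : E X, ini a <> ter a).

Record scwol_mor (X X' : scwol) := Smor { mV : V X -> V X'; mE : E X -> E X' }.
Arguments mV {X X'} _ _.
Arguments mE {X X'} _ _.

Definition is_scwol_mor (X X' : scwol) (l : scwol_mor X X') : Prop :=
  (forall a, ini (mE l a) = mV l (ini a)) /\
  (forall a, ter (mE l a) = mV l (ter a)) /\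
  (forall a b, composable a b -> mE l (cmp a b) = cmp (mE l a) (mE l b)).

(* Oriented edges: (a,true) is a^+ with i(a^+)=t(a), t(a^+)=i(a);
   (a,false) is a^- with i(a^-)=i(a), t(a^-)=t(a). *)
Definition oedge (X : scwol) : Type := (E X * bool)%type.
Definition oi (X : scwol) (e : oedge X) : V X := if snd e then ter (fst e) else ini (fst e).
Definition ot (X : scwol) (e : oedge X) : V X := if snd e then ini (fst e) else ter (fst e).

Fixpoint is_path (X : scwol) (u v : V X) (p : list (oedge X)) : Prop :=
  match p with
  | [] => u = v
  | e :: p' => oi e = u /\ is_path (ot e) v p'
  end.

Fixpoint no_backtrack (X : scwol) (p : list (oedge X)) : Prop :=
  match p with
  | [] => True
  | e1 :: p' =>
      match p' with
      | [] => True
      | e2 :: _ => ~ (fst e2 = fst e1 /\ snd e2 = negb (snd e1)) /\ no_backtrack p'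
      end
  end.

Definition in_sub (X : scwol) (T : E X -> Prop) (p : list (oedge X)) : Prop :=
  Forall (fun e => T (fst e)) p.

(* |X| is connected iff its 1-skeleton (vertices V X, one 1-cell per edge) is. *)
Definition connected (X : scwol) : Prop :=
  forall u v : V X, exists p, is_path u v p.

(* A tree in the 1-skeleton: vertex set W, edge set T. *)
Definition is_tree (X : scwol) (W : V X -> Prop) (T : E X -> Prop) : Prop :=
  (exists v, W v) /\
  (forall a, T a -> W (ini a) /\ W (ter a)) /\
  (forall u v, W u -> W v -> exists p, is_path u v p /\ in_sub T p) /\
  (forall u p, is_path u u p -> in_sub T p -> no_backtrack p -> p = []).

Definition maximal_tree (X : scwol) (T : E X -> Prop) : Prop :=
  exists W, is_tree W T /\
    forall W' T', is_tree W' T' -> (forall v, W v -> W' v) -> (forall a, T a -> T' a) ->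
      (forall v, W' v -> W v) /\ (forall a, T' a -> T a).

(* The family (G_sigma) is encoded as a bundle:
   a type Gel of all local group elements with loc : Gel -> V Y, so that
   G_sigma = {x | loc x = sigma} (the disjoint union of the G_sigma).  *)

Record cog (Y : scwol) := Cog {
  Gel : Type;
  loc : Gel -> V Y;
  gmul : Gel -> Gel -> Gel;
  gone : V Y -> Gel;
  ginv : Gel -> Gel;
  psi : E Y -> Gel -> Gel;
  twist : E Y -> E Y -> Gel }.
Arguments Gel {Y} _.
Arguments loc {Y c} _.
Arguments gmul {Y c} _ _.
Arguments gone {Y} c _.
Arguments ginv {Y c} _.
Arguments psi {Y c} _ _.
Arguments twist {Y c} _ _.

Definition is_cog (Y : scwol) (C : cog Y) : Prop :=
  (forall s, loc (gone C s) = s) /\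
  (forall x y : Gel C, loc x = loc y -> loc (gmul x y) = loc x) /\
  (forall x : Gel C, loc (ginv x) = loc x) /\
  (forall x y z : Gel C, loc x = loc y -> loc y = loc z ->
       gmul (gmul x y) z = gmul x (gmul y z)) /\
  (forall x : Gel C, gmul (gone C (loc x)) x = x /\ gmul x (gone C (loc x)) = x) /\
  (forall x : Gel C, gmul (ginv x) x = gone C (loc x) /\ gmul x (ginv x) = gone C (loc x)) /\
  (forall a (x : Gel C), loc x = ini a -> loc (psi a x) = ter a) /\
  (forall a (x y : Gel C), loc x = ini a -> loc y = ini a ->
       psi a (gmul x y) = gmul (psi a x) (psi a y)) /\
  (forall a (x y : Gel C), loc x = ini a -> loc y = ini a -> psi a x = psi a y -> x = y) /\
  (forall a b, composable a b -> loc (twist (c:=C) a b) = ter a) /\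
  (forall a b (x : Gel C), composable a b -> loc x = ini b ->
       gmul (gmul (twist a b) (psi (cmp a b) x)) (ginv (twist a b)) = psi a (psi b x)) /\
  (forall a b c, composable a b -> composable b c ->
       gmul (psi a (twist b c)) (twist (c:=C) a (cmp b c))
       = gmul (twist a b) (twist (cmp a b) c)).

Record cog_mor (Y Y' : scwol) (C : cog Y) (C' : cog Y') := Cmor {
  phi : Gel C -> Gel C';
  phiE : E Y -> Gel C' }.
Arguments phi {Y Y' C C'} _ _.
Arguments phiE {Y Y' C C'} _ _.

Definition is_cog_mor (Y Y' : scwol) (C : cog Y) (C' : cog Y')
    (l : scwol_mor Y Y') (m : cog_mor C C') : Prop :=
  (forall x : Gel C, loc (phi m x) = mV l (loc x)) /\
  (forall x y : Gel C, loc x = loc y -> phi m (gmul x y) = gmul (phi m x) (phi m y)) /\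
  (forall a, loc (phiE m a) = ter (mE l a)) /\
  (forall a (x : Gel C), loc x = ini a ->
     gmul (gmul (phiE m a) (psi (mE l a) (phi m x))) (ginv (phiE m a)) = phi m (psi a x)) /\
  (forall a b, composable a b ->
     gmul (phi m (twist a b)) (phiE m (cmp a b))
     = gmul (gmul (phiE m a) (psi (mE l a) (phiE m b))) (twist (mE l a) (mE l b))).

Definition is_action (G : grp) (X : scwol) (aV : G -> V X -> V X) (aE : G -> E X -> E X) : Prop :=
  (forall v, aV (gid G) v = v) /\ (forall a, aE (gid G) a = a) /\
  (forall g h v, aV (gop G g h) v = aV g (aV h v)) /\
  (forall g h a, aE (gop G g h) a = aE g (aE h a)) /\
  (forall g a, ini (aE g a) = aV g (ini a)) /\
  (forall g a, ter (aE g a) = aV g (ter a)) /\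
  (forall g a b, composable a b -> aE g (cmp a b) = cmp (aE g a) (aE g b)) /\
  (forall g a, aV g (ini a) <> ter a) /\
  (forall g a, aV g (ini a) = ini a -> aE g a = a).

(* C is developable: C is isomorphic (over an identification Y = G\X given
   by the quotient map p) to the complex of groups associated to an action
   of a group G on a scwol X, with lifts sigma-bar, a-bar and elements h_a:
   local groups Stab(sigma-bar), psi_a = Ad(h_a), g_{a,b} = h_a h_b h_{ab}^{-1}. *)
Definition developable (Y : scwol) (C : cog Y) : Prop :=
  exists (G : grp) (X : scwol) (aV : G -> V X -> V X) (aE : G -> E X -> E X)
         (p : scwol_mor X Y) (lift : V Y -> V X) (elift : E Y -> E X) (h : E Y -> G)
         (f : Gel C -> G) (fE : E Y -> G),
    is_grp G /\ is_scwol X /\ is_action aV aE /\ is_scwol_mor p /\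
    (* p identifies Y with the quotient G\X *)
    (forall u v, mV p u = mV p v <-> exists g, aV g u = v) /\
    (forall a b, mE p a = mE p b <-> exists g, aE g a = b) /\
    (forall s, mV p (lift s) = s) /\
    (forall a, mE p (elift a) = a /\ ini (elift a) = lift (ini a)) /\
    (forall a, aV (h a) (ter (elift a)) = lift (ter a)) /\
    (* (f, fE) is an isomorphism of complexes of groups over the identity *)
    (forall x, aV (f x) (lift (loc x)) = lift (loc x)) /\
    (forall x y : Gel C, loc x = loc y -> f (gmul x y) = gop G (f x) (f y)) /\
    (forall x y : Gel C, loc x = loc y -> f x = f y -> x = y) /\
    (forall s g, aV g (lift s) = lift s -> exists x, loc x = s /\ f x = g) /\
    (forall a, aV (fE a) (lift (ter a)) = lift (ter a)) /\
    (forall a (x : Gel C), loc x = ini a ->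
       gop G (gop G (fE a) (gop G (gop G (h a) (f x)) (ginvg G (h a)))) (ginvg G (fE a))
       = f (psi a x)) /\
    (forall a b, composable a b ->
       gop G (f (twist a b)) (fE (cmp a b))
       = gop G (gop G (fE a) (gop G (gop G (h a) (fE b)) (ginvg G (h a))))
               (gop G (gop G (h a) (h b)) (ginvg G (h (cmp a b))))).

Definition word (A : Type) : Type := list (A * bool).   (* true = formal inverse *)
Definition winv {A : Type} (w : word A) : word A :=
  rev (map (fun x => (fst x, negb (snd x))) w).

Inductive pstep {A : Type} (rels : word A -> word A -> Prop) : word A -> word A -> Prop :=
| ps_red u v x b : pstep rels (u ++ (x, b) :: (x, negb b) :: v) (u ++ v)
| ps_rel u v l r : rels l r -> pstep rels (u ++ l ++ v) (u ++ r ++ v).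

Definition peq {A : Type} (rels : word A -> word A -> Prop) : word A -> word A -> Prop :=
  clos_refl_sym_trans (word A) (pstep rels).

Definition pgrp {A : Type} (rels : word A -> word A -> Prop) : Type := quot (peq rels).

Definition pmul {A} {rels : word A -> word A -> Prop} (g h : pgrp rels) : pgrp rels :=
  cls (peq rels) (rep g ++ rep h).
Definition pone {A} (rels : word A -> word A -> Prop) : pgrp rels := cls (peq rels) [].
Definition pinv {A} {rels : word A -> word A -> Prop} (g : pgrp rels) : pgrp rels :=
  cls (peq rels) (winv (rep g)).

Definition wmap {A B : Type} (f : A -> word B) (w : word A) : word B :=
  flat_map (fun x : A * bool => if snd x then winv (f (fst x)) else f (fst x)) w.

Section Fundamental.
Variables (Y : scwol) (C : cog Y).

Definition letter : Type := (Gel C + E Y)%type.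
Definition gen (x : Gel C) : word letter := [(inl x, false)].
Definition eplus (a : E Y) : word letter := [(inr a, false)].
Definition eminus (a : E Y) : word letter := [(inr a, true)].

(* relations of FG(Y); the relations of each G_sigma are given by its
   multiplication table *)
Definition FGrel (l r : word letter) : Prop :=
  (exists x y : Gel C, loc x = loc y /\ l = gen x ++ gen y /\ r = gen (gmul x y)) \/
  (exists a b, composable a b /\ l = eplus a ++ eplus b /\ r = gen (twist a b) ++ eplus (cmp a b)) \/
  (exists a (x : Gel C), loc x = ini a /\ l = gen (psi a x) /\ r = eplus a ++ gen x ++ eminus a).

Definition FG : Type := pgrp FGrel.

Definition pi1rel (T : E Y -> Prop) (l r : word letter) : Prop :=
  FGrel l r \/ (exists a, T a /\ l = eplus a /\ r = []).

Definition pi1 (T : E Y -> Prop) : Type := pgrp (pi1rel T).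

(* the unique edge path without backtracking in T from s0 to s *)
Definition tpath (T : E Y -> Prop) (s0 s : V Y) : list (oedge Y) :=
  choose [] (fun p => is_path s0 s p /\ no_backtrack p /\ in_sub T p).

Definition oword (e : oedge Y) : word letter :=
  if snd e then eplus (fst e) else eminus (fst e).

Definition piw (T : E Y -> Prop) (s0 s : V Y) : word letter := flat_map oword (tpath T s0 s).

Definition kappa_letter (T : E Y -> Prop) (s0 : V Y) (x : letter) : word letter :=
  match x with
  | inl g => piw T s0 (loc g) ++ gen g ++ winv (piw T s0 (loc g))
  | inr a => piw T s0 (ter a) ++ eplus a ++ winv (piw T s0 (ini a))
  end.

Definition kappa (T : E Y -> Prop) (s0 : V Y) (g : pi1 T) : FG :=
  cls (peq FGrel) (wmap (kappa_letter T s0) (rep g)).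

Definition Dvrel (T : E Y -> Prop) (x y : word letter * V Y) : Prop :=
  snd x = snd y /\ exists g : Gel C, loc g = snd x /\ peq (pi1rel T) (fst y) (fst x ++ gen g).
Definition Derel (T : E Y -> Prop) (x y : word letter * E Y) : Prop :=
  snd x = snd y /\ exists g : Gel C, loc g = ini (snd x) /\ peq (pi1rel T) (fst y) (fst x ++ gen g).

Definition Dini (T : E Y -> Prop) (e : quot (Derel T)) : quot (Dvrel T) :=
  cls (Dvrel T) (fst (rep e), ini (snd (rep e))).
Definition Dter (T : E Y -> Prop) (e : quot (Derel T)) : quot (Dvrel T) :=
  cls (Dvrel T) (fst (rep e) ++ eminus (snd (rep e)), ter (snd (rep e))).
Definition Dcmp (T : E Y -> Prop) (e f : quot (Derel T)) : quot (Derel T) :=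
  cls (Derel T) (fst (rep f), cmp (snd (rep e)) (snd (rep f))).

Definition D (T : E Y -> Prop) : scwol :=
  Scwol (@Dini T) (@Dter T) (@Dcmp T).

Definition DactV (T : E Y -> Prop) (g : pi1 T) (v : V (D T)) : V (D T) :=
  cls (Dvrel T) (rep g ++ fst (rep v), snd (rep v)).
Definition DactE (T : E Y -> Prop) (g : pi1 T) (e : E (D T)) : E (D T) :=
  cls (Derel T) (rep g ++ fst (rep e), snd (rep e)).

End Fundamental.

Arguments gen {Y C} _.
Arguments eplus {Y C} _.
Arguments eminus {Y C} _.
Arguments FGrel {Y} C _ _.
Arguments pi1rel {Y} C T _ _.
Arguments Dvrel {Y} C T _ _.
Arguments Derel {Y} C T _ _.
Arguments kappa {Y} C T s0 _.
Arguments piw {Y} C T s0 s.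
Arguments tpath {Y} T s0 s.

Section Induced.
Variables (Y Y' : scwol) (C : cog Y) (C' : cog Y') (l : scwol_mor Y Y') (m : cog_mor C C')
          (T : E Y -> Prop) (T' : E Y' -> Prop) (s0 : V Y).

Definition Flet (x : letter C) : word (letter C') :=
  match x with
  | inl g => gen (phi m g)
  | inr a => gen (phiE m a) ++ eplus (mE l a)
  end.

Definition Flam (g : FG C) : FG C' := cls (peq (FGrel C')) (wmap Flet (rep g)).

(* Lambda^lambda = kappa'^{-1} o F lambda o kappa, basepoints s0 and l(s0) *)
Definition Lam (g : pi1 C T) : pi1 C' T' :=
  choose (pone _) (fun h => kappa C' T' (mV l s0) h = Flam (kappa C T s0 g)).

Definition ufun (s : V Y) : pi1 C' T' :=
  choose (pone _) (fun h => kappa C' T' (mV l s0) h =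
     pmul (Flam (cls (peq (FGrel C)) (piw C T s0 s)))
          (pinv (cls (peq (FGrel C')) (piw C' T' (mV l s0) (mV l s))))).

Definition LlamV (v : V (D C T)) : V (D C' T') :=
  cls (Dvrel C' T') (rep (pmul (Lam (cls _ (fst (rep v)))) (ufun (snd (rep v)))), mV l (snd (rep v))).

Definition LlamE (e : E (D C T)) : E (D C' T') :=
  cls (Derel C' T') (rep (pmul (Lam (cls _ (fst (rep e)))) (ufun (ini (snd (rep e))))),
                  mE l (snd (rep e))).

End Induced.

Arguments Lam {Y Y' C C'} l m T T' s0 g.
Arguments ufun {Y Y' C C'} l m T T' s0 s.
Arguments LlamV {Y Y' C C'} l m T T' s0 v.
Arguments LlamE {Y Y' C C'} l m T T' s0 e.

(* Write L([1],σ) = ([u_σ], l σ), normalised so that u_σ0 = 1.  Equivariance gives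
   L([w],σ) = ([Λ(w) u_σ], l σ), and since L commutes with i, t and composition, l is a
   morphism of scwols.  An element g of G_σ fixes ([1],σ), so Λ(g) fixes ([u_σ], l σ):
   u_σ^-1 Λ(g) u_σ lies in the image of G'_{l σ}, which defines λ_σ(g); comparing
   t(L([1],a)) with L(t([1],a)) likewise defines λ(a) by λ(a) l(a)^+ = u_t(a)^-1 Λ(a^+) u_i(a).
   Because G'(Y') is developable, its local groups inject into π1(G'(Y'),T'), so each
   defining relation of FG(Y), transported by x ↦ u^-1 Λ(x) u, becomes an axiom of a
   morphism of complexes of groups.  The same conjugation formula shows that F λ and Λ
   agree through κ_T, which gives Λ = Λ^λ and identifies u_σ, hence L = L^λ. *)

From Stdlib Require Import List Relations ClassicalEpsilon Classical
  FunctionalExtensionality PropExtensionality ProofIrrelevance Lia.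
Import ListNotations.
Set Implicit Arguments.
Unset Strict Implicit.

(** * Presented groups *)

Ltac normalize_app := simpl; repeat rewrite <- app_assoc; simpl; try reflexivity.

Section Presentation.
Variables (A : Type) (rels : word A -> word A -> Prop).
Notation peq := (peq rels).

Lemma peq_refl w : peq w w. Proof. apply rst_refl. Qed.
Lemma peq_sym u v : peq u v -> peq v u. Proof. apply rst_sym. Qed.
Lemma peq_trans u v w : peq u v -> peq v w -> peq u w. Proof. apply rst_trans. Qed.

Lemma pstep_ctx p q u v : pstep rels u v -> pstep rels (p ++ u ++ q) (p ++ v ++ q).
Proof.
  intros [u' v' x b | u' v' l r Hr].
  - replace (p ++ (u' ++ (x, b) :: (x, negb b) :: v') ++ q)
      with ((p ++ u') ++ (x, b) :: (x, negb b) :: (v' ++ q)) by normalize_app.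
    replace (p ++ (u' ++ v') ++ q) with ((p ++ u') ++ (v' ++ q)) by normalize_app.
    constructor.
  - replace (p ++ (u' ++ l ++ v') ++ q) with ((p ++ u') ++ l ++ (v' ++ q)) by normalize_app.
    replace (p ++ (u' ++ r ++ v') ++ q) with ((p ++ u') ++ r ++ (v' ++ q)) by normalize_app.
    constructor; assumption.
Qed.

Lemma peq_ctx p q u v : peq u v -> peq (p ++ u ++ q) (p ++ v ++ q).
Proof.
  induction 1 as [u v H| | |].
  - apply rst_step, pstep_ctx, H.
  - apply peq_refl.
  - apply peq_sym; assumption.
  - eapply peq_trans; eassumption.
Qed.

Lemma peq_app u u' v v' : peq u u' -> peq v v' -> peq (u ++ v) (u' ++ v').
Proof.
  intros Hu Hv. apply peq_trans with (u' ++ v).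
  - generalize (peq_ctx [] v Hu); simpl; auto.
  - generalize (peq_ctx u' [] Hv); rewrite !app_nil_r; auto.
Qed.

Lemma peq_rel l r : rels l r -> peq l r.
Proof.
  intros H. generalize (ps_rel [] [] H); simpl; rewrite !app_nil_r.
  apply rst_step.
Qed.

Lemma winv_app (u v : word A) : winv (u ++ v) = winv v ++ winv u.
Proof. unfold winv. rewrite map_app, rev_app_distr. reflexivity. Qed.

Lemma winv_involutive (u : word A) : winv (winv u) = u.
Proof.
  unfold winv. rewrite map_rev, rev_involutive, map_map.
  erewrite map_ext; [apply map_id|]. intros [x b]; simpl; rewrite Bool.negb_involutive; auto.
Qed.

Lemma peq_inv_r u : peq (u ++ winv u) [].
Proof.
  induction u as [|[x b] u IH]; simpl. apply peq_refl.
  change ((x, b) :: u) with ([(x, b)] ++ u). rewrite winv_app.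
  change (winv [(x, b)]) with [(x, negb b)].
  apply peq_trans with ([(x, b)] ++ [] ++ [(x, negb b)]).
  - replace ((x, b) :: u ++ winv u ++ [(x, negb b)])
      with ([(x, b)] ++ (u ++ winv u) ++ [(x, negb b)]) by normalize_app.
    apply peq_ctx, IH.
  - apply rst_step. apply (ps_red rels [] [] x b).
Qed.

Lemma peq_inv_l u : peq (winv u ++ u) [].
Proof. generalize (peq_inv_r (winv u)); rewrite winv_involutive; auto. Qed.

Lemma peq_cancel_r u v w : peq (u ++ w) (v ++ w) -> peq u v.
Proof.
  intros H. apply peq_trans with (u ++ w ++ winv w).
  { generalize (peq_app (peq_refl u) (peq_sym (peq_inv_r w))); rewrite app_nil_r; auto. }
  apply peq_trans with (v ++ w ++ winv w).
  { rewrite !app_assoc. apply peq_app; [exact H | apply peq_refl]. }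
  generalize (peq_app (peq_refl v) (peq_inv_r w)); rewrite app_nil_r; auto.
Qed.

Lemma peq_cancel_l u v w : peq (w ++ u) (w ++ v) -> peq u v.
Proof.
  intros H. apply peq_trans with (winv w ++ w ++ u).
  { generalize (peq_app (peq_sym (peq_inv_l w)) (peq_refl u)); simpl; rewrite app_assoc; auto. }
  apply peq_trans with (winv w ++ w ++ v).
  { apply peq_app; [apply peq_refl | exact H]. }
  generalize (peq_app (peq_inv_l w) (peq_refl v)); simpl; rewrite app_assoc; auto.
Qed.

Lemma peq_winv u v : peq u v -> peq (winv u) (winv v).
Proof.
  intros H. apply peq_cancel_l with u. apply peq_trans with []; [apply peq_inv_r|].
  apply peq_sym, peq_trans with (v ++ winv v).
  - apply peq_app; [exact H | apply peq_refl].
  - apply peq_inv_r.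
Qed.

End Presentation.

Arguments peq_refl {A rels} w.
Arguments peq_inv_r {A rels} u.
Arguments peq_inv_l {A rels} u.

Lemma peq_mono A (r1 r2 : word A -> word A -> Prop) :
  (forall l r, r1 l r -> r2 l r) -> forall u v, peq r1 u v -> peq r2 u v.
Proof.
  intros Hr u v. induction 1 as [u v H| | |].
  - apply rst_step. destruct H; constructor; auto.
  - apply rst_refl.
  - apply rst_sym; assumption.
  - eapply rst_trans; eassumption.
Qed.

Section WordMaps.
Variables (A B : Type).

Lemma wmap_app (f : A -> word B) u v : wmap f (u ++ v) = wmap f u ++ wmap f v.
Proof. apply flat_map_app. Qed.

Lemma wmap_ext (f g : A -> word B) : (forall x, f x = g x) -> forall w, wmap f w = wmap g w.
Proof. intros H w. apply flat_map_ext. intros [x b]; rewrite H; reflexivity. Qed.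

Lemma wmap_peq (r1 : word A -> word A -> Prop) (r2 : word B -> word B -> Prop) (f : A -> word B) :
  (forall l r, r1 l r -> peq r2 (wmap f l) (wmap f r)) ->
  forall u v, peq r1 u v -> peq r2 (wmap f u) (wmap f v).
Proof.
  intros Hr u v. induction 1 as [u v Hs| | |]; [destruct Hs as [u' v' x b | u' v' l r H]| | |].
  - rewrite !wmap_app. change ((x, b) :: (x, negb b) :: v') with ([(x, b); (x, negb b)] ++ v').
    rewrite wmap_app.
    apply (peq_ctx (wmap f u') (wmap f v') (u := wmap f [(x, b); (x, negb b)]) (v := [])).
    simpl. rewrite app_nil_r. destruct b; simpl; rewrite ?winv_involutive.
    + apply peq_inv_l.
    + apply peq_inv_r.
  - rewrite !wmap_app. apply peq_ctx, Hr, H.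
  - apply peq_refl.
  - apply peq_sym; assumption.
  - eapply peq_trans; eassumption.
Qed.

Lemma wmap_ext_peq (r : word B -> word B -> Prop) (f g : A -> word B) :
  (forall x, peq r (f x) (g x)) -> forall u, peq r (wmap f u) (wmap g u).
Proof.
  intros H u. induction u as [|[x b] u IH]; [apply peq_refl|].
  change ((x, b) :: u) with ([(x, b)] ++ u). rewrite !wmap_app. apply peq_app; [|exact IH].
  simpl. rewrite !app_nil_r. destruct b; [apply peq_winv|]; apply H.
Qed.

End WordMaps.

Lemma wmap_letters A (w : word A) : wmap (fun x => [(x, false)]) w = w.
Proof.
  induction w as [|[x b] w IH]; auto. change ((x, b) :: w) with ([(x, b)] ++ w).
  rewrite wmap_app, IH. destruct b; reflexivity.
Qed.


Section Quotient.
Variables (X : Type) (R : X -> X -> Prop).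
Hypotheses (R_refl : forall x, R x x) (R_sym : forall x y, R x y -> R y x)
  (R_trans : forall x y z, R x y -> R y z -> R x z).

Lemma quot_ext (q1 q2 : quot R) : proj1_sig q1 = proj1_sig q2 -> q1 = q2.
Proof. destruct q1, q2; simpl; intros ->; f_equal; apply proof_irrelevance. Qed.

Lemma rep_spec (q : quot R) : proj1_sig q = R (rep q).
Proof. unfold rep. destruct (constructive_indefinite_description _ _) as [y Hy]; exact Hy. Qed.

Lemma rep_cls x : R x (rep (cls R x)).
Proof. generalize (rep_spec (cls R x)); simpl; intros H; rewrite H; apply R_refl. Qed.

Lemma cls_inj x y : cls R x = cls R y -> R x y.
Proof. intros H. apply (f_equal (@proj1_sig _ _)) in H; simpl in H. rewrite H; apply R_refl. Qed.

Lemma cls_rep q : cls R (rep q) = q.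
Proof. apply quot_ext; simpl. rewrite rep_spec; reflexivity. Qed.

Lemma cls_eq x y : R x y -> cls R x = cls R y.
Proof.
  intros H. apply quot_ext; simpl. apply functional_extensionality; intros z.
  apply propositional_extensionality; split; eauto.
Qed.

End Quotient.

Lemma choose_spec A (a : A) (P : A -> Prop) : (exists x, P x) -> P (choose a P).
Proof. intros H. unfold choose. apply epsilon_spec, H. Qed.

Section PresentedGroup.
Variables (A : Type) (rels : word A -> word A -> Prop).
Notation peq := (peq rels).

Lemma pgrp_rep_cls x : peq x (rep (cls peq x)).
Proof. apply rep_cls, peq_refl. Qed.

Lemma pgrp_cls_rep q : cls peq (rep q) = q.
Proof. apply cls_rep. Qed.

Lemma pgrp_cls_eq x y : peq x y -> cls peq x = cls peq y.
Proof. apply cls_eq; [apply peq_sym | eapply peq_trans]. Qed.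

Lemma pgrp_cls_inj x y : cls peq x = cls peq y -> peq x y.
Proof. apply cls_inj, peq_refl. Qed.

Lemma pmul_cls u v : pmul (cls peq u) (cls peq v) = cls peq (u ++ v).
Proof. apply pgrp_cls_eq, peq_app; apply peq_sym, pgrp_rep_cls. Qed.

Lemma rep_pmul (g h : pgrp rels) : peq (rep (pmul g h)) (rep g ++ rep h).
Proof. apply peq_sym, pgrp_rep_cls. Qed.

End PresentedGroup.

Section PresentedGroupHom.
Variables (A B : Type) (r1 : word A -> word A -> Prop) (r2 : word B -> word B -> Prop)
  (Lam : pgrp r1 -> pgrp r2).
Hypothesis Lam_mul : forall g h, Lam (pmul g h) = pmul (Lam g) (Lam h).

Definition hom_word (w : word A) : word B := rep (Lam (cls (peq r1) w)).

Lemma hom_word_cls w : cls (peq r2) (hom_word w) = Lam (cls (peq r1) w).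
Proof. apply pgrp_cls_rep. Qed.

Lemma hom_word_peq u v : peq r1 u v -> hom_word u = hom_word v.
Proof. intros H. unfold hom_word. rewrite (pgrp_cls_eq H). reflexivity. Qed.

Lemma hom_word_app u v : peq r2 (hom_word (u ++ v)) (hom_word u ++ hom_word v).
Proof. unfold hom_word. rewrite <- pmul_cls, Lam_mul. apply rep_pmul. Qed.

Lemma hom_word_nil : peq r2 (hom_word []) [].
Proof.
  apply peq_cancel_l with (hom_word []). rewrite app_nil_r.
  apply peq_sym, (hom_word_app [] []).
Qed.

Lemma hom_word_winv u : peq r2 (hom_word (winv u)) (winv (hom_word u)).
Proof.
  apply peq_cancel_l with (hom_word u). eapply peq_trans; [apply peq_sym, hom_word_app|].
  rewrite (hom_word_peq (peq_inv_r (rels := r1) u)).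
  eapply peq_trans; [apply hom_word_nil | apply peq_sym, peq_inv_r].
Qed.

Lemma wmap_hom_word w : peq r2 (wmap (fun x => hom_word [(x, false)]) w) (hom_word w).
Proof.
  induction w as [|[x b] w IH]; [apply peq_sym, hom_word_nil|].
  change ((x, b) :: w) with ([(x, b)] ++ w). rewrite wmap_app.
  eapply peq_trans; [|apply peq_sym, hom_word_app]. apply peq_app; [|exact IH].
  simpl. rewrite app_nil_r. destruct b; [|apply peq_refl].
  change [(x, true)] with (winv [(x, false)]). apply peq_sym, hom_word_winv.
Qed.

End PresentedGroupHom.

Section GroupLaws.
Variable G : grp.
Hypothesis HG : is_grp G.

Lemma grp_assoc (x y z : G) : gop G (gop G x y) z = gop G x (gop G y z). Proof. apply HG. Qed.
Lemma grp_idl (x : G) : gop G (gid G) x = x. Proof. apply HG. Qed.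
Lemma grp_idr (x : G) : gop G x (gid G) = x. Proof. apply HG. Qed.
Lemma grp_invl (x : G) : gop G (ginvg G x) x = gid G. Proof. apply HG. Qed.
Lemma grp_invr (x : G) : gop G x (ginvg G x) = gid G. Proof. apply HG. Qed.

Lemma grp_cancel_l (a b c : G) : gop G a b = gop G a c -> b = c.
Proof.
  intros H. apply (f_equal (gop G (ginvg G a))) in H.
  rewrite <- !grp_assoc, grp_invl, !grp_idl in H. exact H.
Qed.

Lemma grp_cancel_r (a b c : G) : gop G b a = gop G c a -> b = c.
Proof.
  intros H. apply (f_equal (fun z => gop G z (ginvg G a))) in H.
  rewrite !grp_assoc, grp_invr, !grp_idr in H. exact H.
Qed.

Lemma grp_invK_l (a z : G) : gop G (ginvg G a) (gop G a z) = z.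
Proof. rewrite <- grp_assoc, grp_invl, grp_idl. reflexivity. Qed.

Lemma grp_inv_mul (a b : G) : ginvg G (gop G a b) = gop G (ginvg G b) (ginvg G a).
Proof.
  apply (@grp_cancel_l (gop G a b)). rewrite grp_invr, grp_assoc, <- (grp_assoc b).
  rewrite grp_invr, grp_idl, grp_invr. reflexivity.
Qed.

End GroupLaws.

Section Evaluation.
Variables (G : grp) (A : Type) (f : A -> G).
Hypothesis HG : is_grp G.

Definition ev (w : word A) : G :=
  fold_right (fun (x : A * bool) (acc : G) =>
    gop G (if snd x then ginvg G (f (fst x)) else f (fst x)) acc) (gid G) w.

Lemma ev_app u v : ev (u ++ v) = gop G (ev u) (ev v).
Proof.
  induction u as [|x u IH]; simpl; [rewrite (grp_idl HG) | rewrite IH, (grp_assoc HG)]; reflexivity.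
Qed.

Lemma ev_peq (rels : word A -> word A -> Prop) :
  (forall l r, rels l r -> ev l = ev r) -> forall u v, peq rels u v -> ev u = ev v.
Proof.
  intros Hr u v. induction 1 as [u v Hs| | |]; auto; [|congruence].
  destruct Hs as [u v x b | u v l r H]; rewrite !ev_app; simpl; f_equal.
  - rewrite <- (grp_assoc HG).
    destruct b; simpl; rewrite ?(grp_invl HG), ?(grp_invr HG), (grp_idl HG); reflexivity.
  - rewrite (Hr _ _ H). reflexivity.
Qed.

End Evaluation.

(** * Relations of FG(Y) and edge-path words *)

Section ComplexRelations.
Variables (Y : scwol) (C : cog Y).
Hypotheses (HY : is_scwol Y) (HC : is_cog C).

Lemma cog_loc_one s : loc (gone C s) = s. Proof. apply HC. Qed.
Lemma cog_loc_mul (x y : Gel C) : loc x = loc y -> loc (gmul x y) = loc x. Proof. apply HC. Qed.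
Lemma cog_loc_inv (x : Gel C) : loc (ginv x) = loc x. Proof. apply HC. Qed.
Lemma cog_mul1l (x : Gel C) : gmul (gone C (loc x)) x = x. Proof. apply HC. Qed.
Lemma cog_mulV (x : Gel C) : gmul x (ginv x) = gone C (loc x). Proof. apply HC. Qed.
Lemma cog_loc_psi a (x : Gel C) : loc x = ini a -> loc (psi a x) = ter a. Proof. apply HC. Qed.
Lemma cog_loc_twist a b : composable a b -> loc (twist (c:=C) a b) = ter a. Proof. apply HC. Qed.

Notation Feq := (peq (FGrel C)).

Lemma gen_mul (x y : Gel C) : loc x = loc y -> Feq (gen x ++ gen y) (gen (gmul x y)).
Proof. intros H. apply peq_rel. left. eauto. Qed.

Lemma gen_one s : Feq (gen (gone C s)) [].
Proof.
  apply peq_cancel_l with (gen (gone C s)). rewrite app_nil_r.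
  eapply peq_trans; [apply gen_mul; reflexivity|].
  generalize (cog_mul1l (gone C s)). rewrite cog_loc_one. intros ->. apply peq_refl.
Qed.

Lemma gen_inv (x : Gel C) : Feq (gen (ginv x)) (winv (gen x)).
Proof.
  apply peq_cancel_l with (gen x). eapply peq_trans.
  - apply gen_mul. rewrite cog_loc_inv; reflexivity.
  - rewrite cog_mulV. eapply peq_trans; [apply gen_one | apply peq_sym, peq_inv_r].
Qed.

Lemma eplus_gen a (x : Gel C) : loc x = ini a -> Feq (eplus a ++ gen x) (gen (psi a x) ++ eplus a).
Proof.
  intros H. apply peq_sym. eapply peq_trans.
  - apply peq_app; [apply peq_rel; right; right; exists a, x; eauto | apply peq_refl].
  - apply (peq_ctx [(inr a, false); (inl x, false)] [] (peq_inv_l (rels := FGrel C) (eplus a))).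
Qed.

Lemma gen_eminus a (x : Gel C) : loc x = ini a -> Feq (gen x ++ eminus a) (eminus a ++ gen (psi a x)).
Proof.
  intros H. apply peq_cancel_l with (eplus a). rewrite app_assoc.
  eapply peq_trans; [apply peq_app; [apply eplus_gen, H | apply peq_refl]|].
  apply peq_trans with (gen (psi a x)).
  - apply rst_step, (ps_red _ [(inl (psi a x), false)] [] (inr a) false).
  - apply peq_sym, rst_step, (ps_red _ [] _ (inr a) false).
Qed.

Lemma eplus_eplus a b : composable a b ->
  Feq (eplus a ++ eplus b) (gen (twist a b) ++ eplus (cmp a b)).
Proof. intros H. apply peq_rel. right; left. eauto. Qed.

(* [is_wpath u v w]: reading [w] left to right is an edge path from [u] to [v] in which
   [a^+] runs from [t(a)] to [i(a)] and local group letters sit at the current vertex. *)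
Fixpoint is_wpath (u v : V Y) (w : word (letter C)) : Prop :=
  match w with
  | [] => u = v
  | (inl g, _) :: w' => loc g = u /\ is_wpath u v w'
  | (inr a, false) :: w' => u = ter a /\ is_wpath (ini a) v w'
  | (inr a, true) :: w' => u = ini a /\ is_wpath (ter a) v w'
  end.

Lemma is_wpath_app u m v w1 w2 : is_wpath u m w1 -> is_wpath m v w2 -> is_wpath u v (w1 ++ w2).
Proof.
  revert u; induction w1 as [|[[g|a] b] w1 IH]; simpl; intros u H1 H2.
  - subst; assumption.
  - destruct H1; split; eauto.
  - destruct b; destruct H1; split; eauto.
Qed.

Lemma is_wpath_app_inv u v w1 w2 :
  is_wpath u v (w1 ++ w2) -> exists m, is_wpath u m w1 /\ is_wpath m v w2.
Proof.
  revert u; induction w1 as [|[[g|a] b] w1 IH]; simpl; intros u H.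
  - eauto.
  - destruct H as [H1 H2]. destruct (IH _ H2) as [m [? ?]]; eauto.
  - destruct b; destruct H as [H1 H2]; destruct (IH _ H2) as [m [? ?]]; eauto.
Qed.

Lemma is_wpath_winv u v w : is_wpath u v w -> is_wpath v u (winv w).
Proof.
  revert u; induction w as [|[[g|a] b] w IH]; simpl; intros u H.
  - subst; reflexivity.
  - destruct H as [H1 H2]. change ((inl g, b) :: w) with ([(inl g, b)] ++ w).
    rewrite winv_app. apply is_wpath_app with u; simpl; auto.
  - change ((inr a, b) :: w) with ([(inr a, b)] ++ w). rewrite winv_app.
    destruct b; destruct H as [H1 H2]; subst; eapply is_wpath_app; eauto; simpl; auto.
Qed.

Lemma is_wpath_of_path u v p : is_path u v p -> is_wpath u v (flat_map (oword C) p).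
Proof.
  revert u; induction p as [|[a b] p IH]; simpl; intros u H; auto.
  destruct H as [H1 H2]. unfold oi, ot in *; simpl in *.
  destruct b; unfold oword, eplus, eminus; simpl; split; auto.
Qed.

Lemma FGrel_wpath l r : FGrel C l r -> exists u v, is_wpath u v l /\ is_wpath u v r.
Proof.
  intros [[x [y [Hl [-> ->]]]]|[[a [b [Hab [-> ->]]]]|[a [x [Hx [-> ->]]]]]]; simpl.
  - exists (loc x), (loc x). rewrite cog_loc_mul; auto.
  - destruct (proj1 HY a b Hab) as [Hi Ht].
    exists (ter a), (ini b). rewrite cog_loc_twist, Hi, Ht; auto.
  - exists (ter a), (ter a). rewrite cog_loc_psi; auto.
Qed.

Section ConjugatedLetterMap.
Variables (B : Type) (rels : word B -> word B -> Prop) (anchor : V Y -> word B)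
  (M : letter C -> word B).

Definition conj_map (x : letter C) : word B :=
  match x with
  | inl g => anchor (loc g) ++ M x ++ winv (anchor (loc g))
  | inr a => anchor (ter a) ++ M x ++ winv (anchor (ini a))
  end.

(* Along a path the intermediate anchor words cancel. *)
Lemma wmap_conj_map u v w : is_wpath u v w ->
  peq rels (wmap conj_map w) (anchor u ++ wmap M w ++ winv (anchor v)).
Proof.
  assert (cancel_mid : forall p q z, peq rels (p ++ winv q ++ q ++ z) (p ++ z)).
  { intros p q z. generalize (peq_ctx p z (peq_inv_l (rels := rels) q)); simpl.
    rewrite !app_assoc; auto. }
  revert u; induction w as [|[x b] w IH]; intros u H.
  - simpl in H; subst. apply peq_sym, peq_inv_r.
  - change ((x, b) :: w) with ([(x, b)] ++ w). rewrite !wmap_app.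
    assert (Hx : exists m, is_wpath m v w /\
      conj_map x = anchor (if b then m else u) ++ M x ++ winv (anchor (if b then u else m))).
    { destruct x as [g|a]; simpl in H.
      - destruct H; subst. exists (loc g). destruct b; auto.
      - destruct b; destruct H; subst; eexists; simpl; eauto. }
    destruct Hx as [m [Hw Hc]].
    eapply peq_trans; [apply peq_app; [apply peq_refl | apply IH, Hw]|].
    simpl. rewrite !app_nil_r. rewrite Hc. destruct b.
    + rewrite !winv_app, winv_involutive.
      generalize (cancel_mid (anchor u ++ winv (M x)) (anchor m) (wmap M w ++ winv (anchor v))).
      normalize_app; auto.
    + generalize (cancel_mid (anchor u ++ M x) (anchor m) (wmap M w ++ winv (anchor v))).
      normalize_app; auto.
Qed.

Lemma conj_map_FGrel l r : FGrel C l r -> peq rels (wmap M l) (wmap M r) ->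
  peq rels (wmap conj_map l) (wmap conj_map r).
Proof.
  intros H HM. destruct (FGrel_wpath H) as [u [v [Hl Hr]]].
  eapply peq_trans; [apply wmap_conj_map, Hl|].
  eapply peq_trans; [|apply peq_sym, wmap_conj_map, Hr].
  apply peq_ctx, HM.
Qed.

End ConjugatedLetterMap.

End ComplexRelations.

(** * Edge paths and maximal trees *)

Section Paths.
Variable Y : scwol.

Lemma is_path_app (u v : V Y) p q :
  is_path u v (p ++ q) <-> exists m, is_path u m p /\ is_path m v q.
Proof.
  revert u; induction p as [|e p IH]; simpl; intros u; split.
  - eauto.
  - intros [m [-> H]]; exact H.
  - intros [H1 H2]. apply IH in H2. destruct H2 as [m [? ?]]. eauto.
  - intros [m [[H1 H2] H3]]. split; [exact H1|]. apply IH; eauto.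
Qed.

Definition oedge_rev (e : oedge Y) : oedge Y := (fst e, negb (snd e)).
Definition path_rev (p : list (oedge Y)) : list (oedge Y) := rev (map oedge_rev p).

Lemma oi_rev (e : oedge Y) : oi (oedge_rev e) = ot e.
Proof. destruct e as [a []]; reflexivity. Qed.
Lemma ot_rev (e : oedge Y) : ot (oedge_rev e) = oi e.
Proof. destruct e as [a []]; reflexivity. Qed.

Lemma is_path_rev u v p : is_path u v p -> is_path v u (path_rev p).
Proof.
  revert u; induction p as [|e p IH]; simpl; intros u H.
  - subst; reflexivity.
  - destruct H as [H1 H2]. unfold path_rev; simpl. apply is_path_app. exists (ot e).
    split; [apply IH, H2|]. simpl. rewrite oi_rev, ot_rev. auto.
Qed.

Lemma in_sub_rev (T : E Y -> Prop) p : in_sub T p -> in_sub T (path_rev p).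
Proof.
  unfold in_sub, path_rev. intros H. apply Forall_rev, Forall_map.
  eapply Forall_impl; [|exact H]. simpl; auto.
Qed.

Lemma path_word_rev (C : cog Y) p :
  flat_map (oword C) (path_rev p) = winv (flat_map (oword C) p).
Proof.
  induction p as [|e p IH]; auto. unfold path_rev in *; simpl.
  rewrite flat_map_app. unfold oedge in *. rewrite IH, winv_app. simpl.
  rewrite app_nil_r. f_equal. destruct e as [a []]; reflexivity.
Qed.

Lemma backtrack_split (p : list (oedge Y)) : ~ no_backtrack p ->
  exists p1 e p2, p = p1 ++ e :: oedge_rev e :: p2.
Proof.
  induction p as [|e1 p IH]; simpl; intros H; [tauto|].
  destruct p as [|e2 p]; [tauto|].
  destruct (classic (fst e2 = fst e1 /\ snd e2 = negb (snd e1))) as [[Hf Hs]|Hb].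
  - exists [], e1, p. destruct e1, e2; unfold oedge_rev; simpl in *; subst; reflexivity.
  - destruct IH as [p1 [e [p2 ->]]]; [tauto|]. exists (e1 :: p1), e, p2. reflexivity.
Qed.

Lemma reduce_path (C : cog Y) (rels : word (letter C) -> word (letter C) -> Prop)
    (T : E Y -> Prop) u v p :
  is_path u v p -> in_sub T p ->
  exists q, is_path u v q /\ in_sub T q /\ no_backtrack q /\
            peq rels (flat_map (oword C) p) (flat_map (oword C) q).
Proof.
  remember (length p) as n eqn:Hn. revert p u v Hn.
  induction n as [n IH] using Wf_nat.lt_wf_ind. intros p u v Hn Hp Hs.
  destruct (classic (no_backtrack p)) as [Hb|Hb].
  { exists p; repeat split; auto. apply peq_refl. }
  destruct (backtrack_split Hb) as [p1 [e [p2 ->]]].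
  assert (Hp' : is_path u v (p1 ++ p2)).
  { apply is_path_app in Hp. destruct Hp as [m [Hp1 [Hoi [_ Hp2]]]].
    apply is_path_app. exists m. split; [exact Hp1|].
    rewrite ot_rev, Hoi in Hp2. exact Hp2. }
  assert (Hs' : in_sub T (p1 ++ p2)).
  { unfold in_sub in *. apply Forall_app in Hs. destruct Hs as [Hs1 Hs2].
    apply Forall_app; split; [exact Hs1|]. do 2 apply Forall_inv_tail in Hs2. exact Hs2. }
  destruct (IH (length (p1 ++ p2))) with (p1 ++ p2) u v as [q [Hq [Hsq [Hnq Hw]]]]; auto.
  { subst n. rewrite !length_app. simpl. lia. }
  exists q; repeat split; auto.
  eapply peq_trans; [|exact Hw].
  rewrite !flat_map_app. simpl.
  destruct e as [a []]; unfold oword, eplus, eminus; simpl; apply rst_step;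
    [apply (ps_red rels _ _ (inr a) false) | apply (ps_red rels _ _ (inr a) true)].
Qed.

End Paths.

Section Trees.
Variable Y : scwol.
Hypothesis HY : is_scwol Y.

Lemma oi_orient (c : E Y) b1 b2 : oi (c, b1) = oi (c, b2) -> b1 = b2.
Proof. unfold oi; destruct b1, b2; simpl; auto; intros H; exfalso; apply (proj2 (proj2 HY) c); auto. Qed.
Lemma ot_orient (c : E Y) b1 b2 : ot (c, b1) = ot (c, b2) -> b1 = b2.
Proof. unfold ot; destruct b1, b2; simpl; auto; intros H; exfalso; apply (proj2 (proj2 HY) c); auto. Qed.

Lemma oi_ends (e : oedge Y) : oi e = ini (fst e) \/ oi e = ter (fst e).
Proof. destruct e as [a []]; unfold oi; simpl; auto. Qed.
Lemma ot_ends (e : oedge Y) : ot e = ini (fst e) \/ ot e = ter (fst e).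
Proof. destruct e as [a []]; unfold ot; simpl; auto. Qed.

Lemma exit_edge (W : V Y -> Prop) u v p : W u -> ~ W v -> is_path u v p ->
  exists e : oedge Y, W (oi e) /\ ~ W (ot e).
Proof.
  revert u; induction p as [|e p IH]; simpl; intros u Hu Hv Hp.
  - subst; tauto.
  - destruct Hp as [H1 H2]. destruct (classic (W (ot e))) as [Hw|Hw].
    + eapply IH; eauto.
    + exists e; subst; auto.
Qed.

Lemma no_backtrack_tail (e : oedge Y) p : no_backtrack (e :: p) -> no_backtrack p.
Proof. destruct p; simpl; tauto. Qed.

Lemma no_backtrack_app_l (p q : list (oedge Y)) : no_backtrack (p ++ q) -> no_backtrack p.
Proof.
  induction p as [|e [|e2 p] IH]; intros H; simpl; auto.
  simpl in H. destruct H as [H1 H2]. split; [exact H1 | apply IH, H2].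
Qed.

Section TreeExtension.
Variables (W : V Y -> Prop) (T : E Y -> Prop) (c : E Y) (b : bool).
Hypotheses (HWT : is_tree W T) (Hx : W (oi (c, b))) (Hy : ~ W (ot (c, b))).

Let W' z := W z \/ z = ot (c, b).
Let T' a := T a \/ a = c.

Lemma tree_edge_avoids_new a : T a -> ini a <> ot (c, b) /\ ter a <> ot (c, b).
Proof.
  intros Ha. destruct (proj1 (proj2 HWT) a Ha).
  split; intros E; apply Hy; rewrite <- E; assumption.
Qed.

Lemma edge_into_new e : T' (fst e) -> ot e = ot (c, b) -> e = (c, b).
Proof.
  destruct e as [c1 b1]; intros [He|He] Ht; simpl in He.
  - destruct (tree_edge_avoids_new He). destruct (ot_ends (c1, b1)) as [E|E]; simpl in E; congruence.
  - subst c1. rewrite (ot_orient Ht). reflexivity.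
Qed.

Lemma edge_out_of_new e : T' (fst e) -> oi e = ot (c, b) -> e = oedge_rev (c, b).
Proof.
  destruct e as [c1 b1]; intros [He|He] Hi; simpl in He.
  - destruct (tree_edge_avoids_new He). destruct (oi_ends (c1, b1)) as [E|E]; simpl in E; congruence.
  - subst c1. rewrite <- (oi_rev (c, b)) in Hi. rewrite (oi_orient Hi). reflexivity.
Qed.

(* A reduced path that enters the new vertex must leave it by the same edge. *)
Lemma reduced_path_avoiding_new q u v : is_path u v q -> in_sub T' q -> no_backtrack q ->
  u <> ot (c, b) -> v <> ot (c, b) -> in_sub T q.
Proof.
  revert u; induction q as [|e1 q IH]; intros u Hq Hs Hn Hu Hv; [constructor|].
  destruct Hq as [Hq1 Hq2]. inversion Hs as [|? ? He1 Hs1]; subst.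
  destruct (classic (ot e1 = ot (c, b))) as [Ht|Ht].
  - exfalso. rewrite (edge_into_new He1 Ht) in *.
    destruct q as [|e2 q]; [simpl in Hq2; congruence|].
    destruct Hq2 as [Hq2 _]. inversion Hs1 as [|? ? He2 _]; subst.
    rewrite (edge_out_of_new He2 Hq2) in Hn. simpl in Hn. tauto.
  - constructor.
    + destruct He1 as [He1|He1]; [exact He1|]. exfalso.
      destruct e1 as [c1 b1]; simpl in He1; subst c1.
      destruct (Bool.bool_dec b1 b) as [->|Hne]; [congruence|].
      apply Hu. replace b1 with (negb b) by (destruct b, b1; simpl; congruence). apply (oi_rev (c, b)).
    + eapply IH; eauto. eapply no_backtrack_tail; eauto.
Qed.

Lemma reduced_cycle_at_new q : is_path (ot (c, b)) (ot (c, b)) q -> in_sub T' q ->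
  no_backtrack q -> q = [].
Proof.
  intros Hq Hs Hn. destruct q as [|e1 q]; [reflexivity|]. exfalso.
  destruct Hq as [Hq1 Hq2]. inversion Hs as [|? ? He1 Hs1]; subst.
  pose proof (edge_out_of_new He1 Hq1) as ->. rewrite ot_rev in Hq2.
  destruct (exists_last (l := q)) as [q2 [en ->]].
  { intros ->. simpl in Hq2. rewrite Hq2 in Hx. contradiction. }
  apply is_path_app in Hq2. destruct Hq2 as [m [Hq2 [Hen1 Hen2]]]. simpl in Hen2.
  unfold in_sub in Hs1. apply Forall_app in Hs1. destruct Hs1 as [Hs2 Hsn].
  inversion Hsn as [|? ? Hen _]; subst.
  pose proof (edge_into_new Hen Hen2) as ->.
  assert (q2 = []) as ->.
  { eapply (proj2 (proj2 (proj2 HWT))); [exact Hq2| |].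
    - apply (reduced_path_avoiding_new Hq2 Hs2).
      + apply no_backtrack_app_l with [(c, b)]. eapply no_backtrack_tail; eauto.
      + intros E; apply Hy; rewrite <- E; exact Hx.
      + intros E; apply Hy; rewrite <- E; exact Hx.
    - apply no_backtrack_app_l with [(c, b)]. eapply no_backtrack_tail; eauto. }
  destruct b; simpl in Hn; tauto.
Qed.

Lemma is_tree_extend : is_tree W' T'.
Proof.
  destruct HWT as [[w0 Hw0] [HTW [HWc HWt]]].
  assert (Hsub : forall p, in_sub T p -> in_sub T' p).
  { intros q. apply Forall_impl. unfold T'; auto. }
  split; [exists w0; left; exact Hw0|]. split; [|split].
  - intros a [Ha | ->]; [destruct (HTW a Ha); split; left; assumption|].
    unfold W'. destruct b; simpl in *; auto.
  - intros u v [Hu | ->] [Hv | ->].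
    + destruct (HWc u v Hu Hv) as [q [? ?]]. eauto.
    + destruct (HWc u _ Hu Hx) as [q [? ?]]. exists (q ++ [(c, b)]). split.
      * apply is_path_app. exists (oi (c, b)); simpl; auto.
      * apply Forall_app; split; [apply Hsub; assumption|]. constructor; unfold T'; simpl; auto.
    + destruct (HWc _ v Hx Hv) as [q [? ?]]. exists (oedge_rev (c, b) :: q). split.
      * simpl. split; [apply oi_rev | rewrite ot_rev; assumption].
      * constructor; [unfold T'; simpl; auto | apply Hsub; assumption].
    + exists []. simpl; split; [reflexivity | constructor].
  - intros u q Hq Hs Hn. destruct (classic (u = ot (c, b))) as [-> | Hu].
    + apply reduced_cycle_at_new; assumption.
    + apply (HWt u); auto. eapply reduced_path_avoiding_new; eauto.
Qed.

End TreeExtension.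

(* A maximal tree contains every vertex: otherwise an edge leaving it extends it. *)
Lemma maximal_tree_spans (T : E Y -> Prop) : connected Y -> maximal_tree T ->
  exists W, is_tree W T /\ forall v, W v.
Proof.
  intros Hc [W [HW Hmax]]. exists W; split; [exact HW|]. intros s.
  destruct (classic (W s)) as [Hs|Hs]; [exact Hs|]. exfalso.
  destruct (proj1 HW) as [w0 Hw0].
  destruct (Hc w0 s) as [p Hp].
  destruct (exit_edge Hw0 Hs Hp) as [[c b] [Hx Hy]].
  destruct (Hmax _ _ (is_tree_extend HW Hx Hy)) as [Hback _]; [left; assumption | left; assumption|].
  apply Hy, Hback. right; reflexivity.
Qed.

Section TreePaths.
Variables (C : cog Y) (T : E Y -> Prop) (W : V Y -> Prop).
Hypotheses (HT : is_tree W T) (HW : forall v, W v).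

Lemma tpath_spec s0 s :
  is_path s0 s (tpath T s0 s) /\ no_backtrack (tpath T s0 s) /\ in_sub T (tpath T s0 s).
Proof.
  unfold tpath. apply choose_spec.
  destruct (proj1 (proj2 (proj2 HT)) s0 s (HW _) (HW _)) as [p [Hp Hs]].
  destruct (reduce_path (C := C) (FGrel C) Hp Hs) as [q [? [? [? _]]]]. eauto.
Qed.

Lemma tpath_self s0 : tpath T s0 s0 = [].
Proof.
  destruct (tpath_spec s0 s0) as [? [? ?]]. eapply (proj2 (proj2 (proj2 HT))); eauto.
Qed.

(* The loop [π_t(a) a^+ π_i(a)^-1] lies in the tree, so it reduces to the empty path. *)
Lemma tree_edge_loop (rels : word (letter C) -> word (letter C) -> Prop) s0 a : T a ->
  peq rels (piw C T s0 (ter a) ++ eplus a ++ winv (piw C T s0 (ini a))) [].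
Proof.
  intros Ha. unfold piw.
  destruct (tpath_spec s0 (ter a)) as [H1 [_ S1]]. destruct (tpath_spec s0 (ini a)) as [H2 [_ S2]].
  set (q := tpath T s0 (ter a) ++ [(a, true)] ++ path_rev (tpath T s0 (ini a))).
  assert (Hq : is_path s0 s0 q).
  { apply is_path_app. exists (ter a). split; [exact H1|]. simpl. split; [reflexivity|].
    apply is_path_rev, H2. }
  assert (Hs : in_sub T q).
  { apply Forall_app; split; [exact S1|]. apply Forall_cons; [exact Ha | apply in_sub_rev, S2]. }
  destruct (reduce_path rels Hq Hs) as [q' [Hq' [Hs' [Hn' Hw]]]].
  rewrite ((proj2 (proj2 (proj2 HT))) _ _ Hq' Hs' Hn') in Hw.
  pose proof (path_word_rev C (tpath T s0 (ini a))) as Hrev. unfold oedge in *.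
  unfold q in Hw. rewrite !flat_map_app, Hrev in Hw. exact Hw.
Qed.

End TreePaths.

End Trees.

(** * The universal cover D(Y,T) *)

Section UniversalCover.
Variables (Y : scwol) (C : cog Y) (T : E Y -> Prop).
Hypothesis HC : is_cog C.
Notation Peq := (peq (pi1rel C T)).

Lemma peq_FG_pi1 u v : peq (FGrel C) u v -> Peq u v.
Proof. apply peq_mono. intros; left; assumption. Qed.

Lemma gen_ginv_solve w w' g : Peq w (w' ++ gen g) -> Peq (gen (ginv g)) (winv w ++ w').
Proof.
  intros H. eapply peq_trans; [apply peq_FG_pi1, gen_inv, HC|].
  apply peq_sym. eapply peq_trans; [apply peq_app; [apply peq_winv, H | apply peq_refl]|].
  rewrite winv_app, <- app_assoc.
  generalize (peq_app (peq_refl (winv (gen g))) (peq_inv_l (rels := pi1rel C T) w')).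
  rewrite app_nil_r. auto.
Qed.

(* Vertices and edges of D(Y,T) are cosets [w G_σ] tagged by a vertex, resp. by an edge
   [a] with [σ = i(a)]; [anchor] is the identity, resp. [ini]. *)
Section Cosets.
Variables (Z : Type) (anchor : Z -> V Y).

Definition coset_rel (x y : word (letter C) * Z) : Prop :=
  snd x = snd y /\ exists g : Gel C, loc g = anchor (snd x) /\ Peq (fst y) (fst x ++ gen g).

Lemma coset_refl x : coset_rel x x.
Proof.
  split; [reflexivity|]. exists (gone C (anchor (snd x))). split; [apply cog_loc_one, HC|].
  generalize (peq_app (peq_refl (fst x)) (peq_sym (peq_FG_pi1 (gen_one HC (anchor (snd x)))))).
  rewrite app_nil_r; auto.
Qed.

Lemma coset_sym x y : coset_rel x y -> coset_rel y x.
Proof.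
  intros [H1 [g [Hg Hp]]]. split; [congruence|]. exists (ginv g).
  split; [rewrite (cog_loc_inv HC); congruence|].
  apply peq_sym. eapply peq_trans; [apply peq_app; [exact Hp | apply peq_FG_pi1, gen_inv, HC]|].
  rewrite <- app_assoc.
  generalize (peq_app (peq_refl (fst x)) (peq_inv_r (rels := pi1rel C T) (gen g))).
  rewrite app_nil_r; auto.
Qed.

Lemma coset_trans x y z : coset_rel x y -> coset_rel y z -> coset_rel x z.
Proof.
  intros [H1 [g [Hg Hp]]] [H2 [h [Hh Hq]]]. split; [congruence|]. exists (gmul g h).
  split; [rewrite (cog_loc_mul HC) by congruence; congruence|].
  eapply peq_trans; [exact Hq|]. eapply peq_trans; [apply peq_app; [exact Hp | apply peq_refl]|].
  rewrite <- app_assoc. apply peq_app; [apply peq_refl|].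
  apply peq_FG_pi1, gen_mul; congruence.
Qed.

Notation coset := (cls coset_rel).

Lemma coset_eq w w' s g : loc g = anchor s -> Peq w' (w ++ gen g) -> coset (w, s) = coset (w', s).
Proof.
  intros H1 H2. apply cls_eq; [exact coset_sym | exact coset_trans |].
  split; [reflexivity|]. exists g; auto.
Qed.

Lemma coset_eq_peq w w' s : Peq w w' -> coset (w, s) = coset (w', s).
Proof.
  intros H. destruct (coset_refl (w, s)) as [_ [g [Hg Hp]]].
  apply coset_eq with g; [exact Hg|]. eapply peq_trans; [apply peq_sym, H | exact Hp].
Qed.

Lemma coset_inj w w' s s' : coset (w, s) = coset (w', s') ->
  s = s' /\ exists g, loc g = anchor s /\ Peq w' (w ++ gen g).
Proof. intros H. apply cls_inj in H; [exact H | exact coset_refl]. Qed.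

Lemma coset_rep w s : snd (rep (coset (w, s))) = s /\
  exists g, loc g = anchor s /\ Peq (fst (rep (coset (w, s)))) (w ++ gen g).
Proof. destruct (rep_cls coset_refl (w, s)) as [H1 H2]; simpl in *; auto. Qed.

Lemma coset_of_rep (q : quot coset_rel) : q = coset (fst (rep q), snd (rep q)).
Proof. rewrite <- surjective_pairing. symmetry. apply cls_rep. Qed.

Lemma coset_act u w s :
  cls coset_rel (rep (cls Peq u) ++ fst (rep (coset (w, s))), snd (rep (coset (w, s))))
  = coset (u ++ w, s).
Proof.
  destruct (coset_rep w s) as [-> [g [Hg Hp]]]. symmetry. apply coset_eq with g; [exact Hg|].
  rewrite <- app_assoc. apply peq_app; [apply peq_sym, pgrp_rep_cls | exact Hp].
Qed.

End Cosets.

Notation DV := (cls (Dvrel C T)).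
Notation DE := (cls (Derel C T)).

Lemma DactV_cls u w s : DactV (cls Peq u) (DV (w, s)) = DV (u ++ w, s).
Proof. apply (coset_act (fun s => s)). Qed.

Lemma DactE_cls u w a : DactE (cls Peq u) (DE (w, a)) = DE (u ++ w, a).
Proof. apply (coset_act (@ini Y)). Qed.

Lemma Dini_cls w a : Dini (DE (w, a)) = DV (w, ini a).
Proof.
  unfold Dini. change (Derel C T) with (coset_rel (@ini Y)).
  destruct (coset_rep (@ini Y) w a) as [-> [g [Hg Hp]]].
  symmetry. apply (coset_eq (anchor := fun s => s) Hg Hp).
Qed.

Lemma Dter_cls w a : Dter (DE (w, a)) = DV (w ++ eminus a, ter a).
Proof.
  unfold Dter. change (Derel C T) with (coset_rel (@ini Y)).
  destruct (coset_rep (@ini Y) w a) as [-> [g [Hg Hp]]].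
  symmetry. apply (coset_eq (anchor := fun s => s) (g := psi a g)); [apply (cog_loc_psi HC), Hg|].
  eapply peq_trans; [apply peq_app; [exact Hp | apply peq_refl]|]. rewrite <- !app_assoc.
  apply peq_app; [apply peq_refl | apply peq_FG_pi1, gen_eminus, Hg; exact HC].
Qed.

Lemma Dcmp_cls w w' a b : ini (cmp a b) = ini b -> Dcmp (DE (w, a)) (DE (w', b)) = DE (w', cmp a b).
Proof.
  intros Hi. unfold Dcmp. change (Derel C T) with (coset_rel (@ini Y)).
  destruct (coset_rep (@ini Y) w a) as [-> _].
  destruct (coset_rep (@ini Y) w' b) as [-> [g' [Hg' Hp']]].
  symmetry. apply (coset_eq (anchor := @ini Y) (g := g')); [simpl; congruence | exact Hp'].
Qed.

End UniversalCover.

(** * The isomorphism κ_T and local groups *)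

Section Kappa.
Variables (Y : scwol) (C : cog Y) (T : E Y -> Prop) (W : V Y -> Prop) (s0 : V Y).
Hypotheses (HY : is_scwol Y) (HC : is_cog C) (HT : is_tree W T) (HW : forall v, W v).
Notation Peq := (peq (pi1rel C T)).
Notation Feq := (peq (FGrel C)).
Notation kl := (kappa_letter T s0).
Notation pi := (piw C T s0).

Lemma kappa_letter_conj (x : letter C) : kl x = conj_map pi (fun x => [(x, false)]) x.
Proof. destruct x; reflexivity. Qed.

Lemma wmap_kappa u v w : is_wpath u v w -> Feq (wmap kl w) (pi u ++ w ++ winv (pi v)).
Proof.
  intros H. rewrite (wmap_ext kappa_letter_conj).
  generalize (wmap_conj_map (FGrel C) pi (fun x => [(x, false)]) H). rewrite wmap_letters; auto.
Qed.

Lemma piw_base : pi s0 = [].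
Proof. unfold piw. rewrite (tpath_self C HT HW). reflexivity. Qed.

Lemma wmap_kappa_loop (w : word (letter C)) : is_wpath s0 s0 w -> Feq (wmap kl w) w.
Proof. intros H. generalize (wmap_kappa H). rewrite piw_base. simpl. rewrite app_nil_r; auto. Qed.

Lemma is_wpath_piw s : is_wpath s0 s (pi s).
Proof. apply is_wpath_of_path, (tpath_spec C HT HW s0 s). Qed.

Lemma is_wpath_wmap_kappa (w : word (letter C)) : is_wpath s0 s0 (wmap kl w).
Proof.
  assert (Hl : forall x : letter C, is_wpath s0 s0 (kl x)).
  { intros [g|a]; cbn [kappa_letter]; eapply is_wpath_app; try apply is_wpath_piw;
      (eapply is_wpath_app; [|apply is_wpath_winv, is_wpath_piw]); simpl; auto. }
  induction w as [|[x b] w IH]; [reflexivity|]. change ((x, b) :: w) with ([(x, b)] ++ w).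
  rewrite wmap_app. eapply is_wpath_app; [|exact IH]. simpl. rewrite app_nil_r.
  destruct b; [apply is_wpath_winv|]; apply Hl.
Qed.

Lemma wmap_kappa_peq u v : Peq u v -> Feq (wmap kl u) (wmap kl v).
Proof.
  apply wmap_peq. intros l r [H|[a [Ha [-> ->]]]].
  - rewrite !(wmap_ext kappa_letter_conj). apply (conj_map_FGrel HY HC); [exact H|].
    rewrite !wmap_letters. apply peq_rel, H.
  - simpl. rewrite app_nil_r. apply (tree_edge_loop HT HW), Ha.
Qed.

Lemma tree_word_trivial p : in_sub T p -> Peq (flat_map (oword C) p) [].
Proof.
  induction 1 as [|e p He Hp IH]; simpl; [apply peq_refl|].
  change [] with ([] ++ [] : word (letter C)). apply peq_app; [|exact IH].
  destruct e as [a []]; unfold oword, eplus, eminus; simpl in *.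
  - apply peq_rel. right. exists a; auto.
  - change [(inr a, true)] with (winv (@eplus _ C a)).
    change (@nil (letter C * bool)) with (winv (@nil (letter C * bool))).
    apply peq_winv, peq_rel. right. exists a; auto.
Qed.

Lemma piw_trivial s : Peq (pi s) [].
Proof. apply tree_word_trivial, (tpath_spec C HT HW s0 s). Qed.

Lemma wmap_kappa_pi1 (w : word (letter C)) : Peq (wmap kl w) w.
Proof.
  rewrite <- (wmap_letters w) at 2. apply wmap_ext_peq. intros x.
  assert (Hconj : forall m : word (letter C), forall s s', Peq (pi s ++ m ++ winv (pi s')) m).
  { intros m s s'.
    generalize (peq_app (piw_trivial s) (peq_app (peq_refl m) (peq_winv (piw_trivial s')))).
    simpl. rewrite app_nil_r. auto. }
  destruct x as [g|a]; apply Hconj.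
Qed.

Lemma kappa_choose_loop (Z : word (letter C)) (q : FG C) :
  is_wpath s0 s0 Z -> q = cls Feq Z -> choose (pone _) (fun h => kappa C T s0 h = q) = cls Peq Z.
Proof.
  intros HZ ->.
  assert (Hex : exists h, kappa C T s0 h = cls Feq Z).
  { exists (cls Peq Z). apply pgrp_cls_eq.
    eapply peq_trans; [apply wmap_kappa_peq, peq_sym, pgrp_rep_cls|].
    apply wmap_kappa_loop, HZ. }
  assert (H := choose_spec (pone (pi1rel C T)) Hex).
  set (h := choose _ _) in *. apply pgrp_cls_inj in H.
  rewrite <- (pgrp_cls_rep h). apply pgrp_cls_eq.
  eapply peq_trans; [apply peq_sym, wmap_kappa_pi1|]. apply peq_FG_pi1, H.
Qed.

End Kappa.

(* The map FG(Y) → G is [g ↦ f g], [a^+ ↦ fE(a) h(a)]. *)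
Lemma developable_local_embedding (Y : scwol) (C : cog Y) : developable C ->
  exists (G : grp) (Psi : letter C -> G), is_grp G /\
    (forall u v, peq (FGrel C) u v -> ev Psi u = ev Psi v) /\
    (forall x y : Gel C, loc x = loc y -> Psi (inl x) = Psi (inl y) -> x = y).
Proof.
  intros [G [X [aV [aE [p [lift [elift [h [f [fE [HG [_ [_ [_ [_ [_ [_ [_ [_ [_
    [Hfm [Hfi [_ [_ [Hpsi Htw]]]]]]]]]]]]]]]]]]]]]]]]].
  exists G, (fun l => match l with inl g => f g | inr a => gop G (fE a) (h a) end).
  split; [exact HG|]. split; [|exact Hfi].
  apply (ev_peq HG).
  intros l r [[x [y [Hxy [-> ->]]]]|[[a [b [Hab [-> ->]]]]|[a [x [Hx [-> ->]]]]]];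
    simpl; rewrite ?(grp_idr HG).
  - rewrite Hfm; auto.
  - rewrite <- (grp_assoc HG (f (twist a b))), Htw by exact Hab.
    rewrite !(grp_assoc HG), (grp_invK_l HG), (grp_invl HG), (grp_idr HG). reflexivity.
  - rewrite <- Hpsi by exact Hx. rewrite (grp_inv_mul HG), !(grp_assoc HG). reflexivity.
Qed.

(* [kappa] carries an equation in π1 back to FG(Y), where the developing group separates
   local elements. *)
Lemma gen_inj (Y : scwol) (C : cog Y) (T : E Y -> Prop) (W : V Y -> Prop) (s0 : V Y) :
  is_scwol Y -> is_cog C -> is_tree W T -> (forall v, W v) -> developable C ->
  forall x y : Gel C, loc x = loc y -> peq (pi1rel C T) (gen x) (gen y) -> x = y.
Proof.
  intros HY HC HT HW Hdev x y Hl Hp.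
  destruct (developable_local_embedding Hdev) as [G [Psi [HG [Hev Hinj]]]].
  apply Hinj; [exact Hl|].
  assert (H := Hev _ _ (wmap_kappa_peq s0 HY HC HT HW Hp)).
  unfold wmap in H; simpl in H. rewrite !app_nil_r, Hl, !(ev_app Psi HG) in H. simpl in H.
  apply (grp_cancel_l HG) in H. apply (grp_cancel_r HG) in H. exact H.
Qed.

(** * The morphism induced by (L, Λ) *)

Section InducedMorphism.
Variables (Y Y' : scwol) (C : cog Y) (C' : cog Y') (T : E Y -> Prop) (T' : E Y' -> Prop)
  (L : scwol_mor (D C T) (D C' T')) (Lambda : pi1 C T -> pi1 C' T') (s0 : V Y)
  (W : V Y -> Prop) (W' : V Y' -> Prop).
Hypotheses (HY : is_scwol Y) (HY' : is_scwol Y') (HC : is_cog C) (HC' : is_cog C')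
  (Hdev' : developable C') (HT : is_tree W T) (HW : forall v, W v)
  (HT' : is_tree W' T') (HW' : forall v, W' v) (HL : is_scwol_mor L)
  (Hhom : forall g h, Lambda (pmul g h) = pmul (Lambda g) (Lambda h))
  (HeqV : forall g v, mV L (DactV g v) = DactV (Lambda g) (mV L v))
  (HeqE : forall g e, mE L (DactE g e) = DactE (Lambda g) (mE L e)).

Notation Peq := (peq (pi1rel C T)).
Notation Peq' := (peq (pi1rel C' T')).
Notation Feq := (peq (FGrel C)).
Notation Feq' := (peq (FGrel C')).
Notation DV := (cls (Dvrel C T)).
Notation DE := (cls (Derel C T)).
Notation DV' := (cls (Dvrel C' T')).
Notation DE' := (cls (Derel C' T')).
Notation Lw := (hom_word Lambda).

Definition lV (s : V Y) : V Y' := snd (rep (mV L (DV ([], s)))).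
Definition lE (a : E Y) : E Y' := snd (rep (mE L (DE ([], a)))).

(* [L([1],σ) = ([uword σ], l σ)]; at [σ0] the representative is normalised to the empty
   word, so that [uword σ] represents [u_σ]. *)
Definition uword (s : V Y) : word (letter C') :=
  if excluded_middle_informative (s = s0) then [] else fst (rep (mV L (DV ([], s)))).

Hypothesis Hbase : mV L (DV ([], s0)) = DV' ([], lV s0).

Lemma uword_spec s : mV L (DV ([], s)) = DV' (uword s, lV s).
Proof.
  unfold uword. destruct (excluded_middle_informative (s = s0)) as [->|_]; [exact Hbase|].
  apply (coset_of_rep (anchor := fun s => s)).
Qed.

Lemma uword_base : uword s0 = [].
Proof. unfold uword. destruct (excluded_middle_informative (s0 = s0)); congruence. Qed.

Lemma L_vertex w s : mV L (DV (w, s)) = DV' (Lw w ++ uword s, lV s).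
Proof.
  transitivity (mV L (DactV (cls Peq w) (DV ([], s)))).
  { rewrite (DactV_cls T HC), app_nil_r. reflexivity. }
  rewrite HeqV, uword_spec, <- hom_word_cls. apply DactV_cls, HC'.
Qed.

Lemma L_edge_base a : mE L (DE ([], a)) = DE' (uword (ini a), lE a) /\ ini (lE a) = lV (ini a).
Proof.
  assert (H := proj1 HL (DE ([], a))).
  rewrite (coset_of_rep (anchor := @ini Y') (mE L (DE ([], a)))) in *.
  change (@ini (D C' T')) with (@Dini Y' C' T') in H. change (@ini (D C T)) with (@Dini Y C T) in H.
  rewrite (Dini_cls T' HC'), (Dini_cls T HC), uword_spec in H.
  apply (coset_inj HC' (anchor := fun s => s)) in H. destruct H as [H1 [g [Hg Hp]]].
  split; [|exact H1]. apply (coset_eq HC' (anchor := @ini Y') (g := g)); assumption.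
Qed.

Lemma lE_ini a : ini (lE a) = lV (ini a). Proof. apply L_edge_base. Qed.

Lemma L_edge w a : mE L (DE (w, a)) = DE' (Lw w ++ uword (ini a), lE a).
Proof.
  transitivity (mE L (DactE (cls Peq w) (DE ([], a)))).
  { rewrite (DactE_cls T HC), app_nil_r. reflexivity. }
  rewrite HeqE, (proj1 (L_edge_base a)), <- hom_word_cls. apply DactE_cls, HC'.
Qed.

(* [Lconj x = u_σ^-1 Λ(x) u_σ']: in π1(G'(Y'),T') this is what [F λ] must send [x] to. *)
Definition Lconj : letter C -> word (letter C') :=
  conj_map (fun s => winv (uword s)) (fun x => Lw [(x, false)]).

Lemma lam_loc_exists (x : Gel C) : exists z, loc z = lV (loc x) /\ Peq' (gen z) (Lconj (inl x)).
Proof.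
  assert (Hfix : DV ([], loc x) = DV (gen x, loc x)).
  { apply (coset_eq HC (anchor := fun s => s) (g := x)); [reflexivity | apply peq_refl]. }
  symmetry in Hfix. apply (f_equal (mV L)) in Hfix. rewrite !L_vertex in Hfix.
  apply (coset_inj HC' (anchor := fun s => s)) in Hfix. destruct Hfix as [_ [g [Hg Hp]]].
  exists (ginv g). split; [rewrite (cog_loc_inv HC'); exact Hg|].
  unfold Lconj, conj_map. rewrite winv_involutive.
  eapply peq_trans; [apply (gen_ginv_solve HC'), Hp|].
  rewrite winv_app, <- app_assoc. apply peq_app; [apply peq_refl|].
  generalize (peq_app (peq_winv (hom_word_nil Hhom)) (peq_refl (Lw (gen x) ++ uword (loc x)))).
  auto.
Qed.

Lemma lE_ter_lam_edge_exists a : ter (lE a) = lV (ter a) /\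
  exists z, loc z = ter (lE a) /\ Peq' (gen z ++ eplus (lE a)) (Lconj (inr a)).
Proof.
  assert (H := proj1 (proj2 HL) (DE ([], a))). rewrite (proj1 (L_edge_base a)) in H.
  change (@ter (D C' T')) with (@Dter Y' C' T') in H. change (@ter (D C T)) with (@Dter Y C T) in H.
  rewrite (Dter_cls T' HC'), (Dter_cls T HC), L_vertex in H.
  apply (coset_inj HC' (anchor := fun s => s)) in H. destruct H as [H0 [g [Hg Hp]]].
  split; [exact H0|]. exists (ginv g). split; [rewrite (cog_loc_inv HC'); exact Hg|].
  apply (gen_ginv_solve HC') in Hp. rewrite app_nil_l, winv_app, <- !app_assoc in Hp.
  eapply peq_trans; [apply peq_app; [exact Hp | apply peq_refl]|].
  unfold Lconj, conj_map. rewrite winv_involutive, <- !app_assoc. apply peq_app; [apply peq_refl|].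
  apply peq_app.
  - change (eminus a) with (winv (@eplus _ C a)).
    generalize (peq_winv (hom_word_winv Hhom (eplus a))). rewrite winv_involutive. auto.
  - change (eminus (lE a)) with (winv (@eplus _ C' (lE a))).
    generalize (peq_app (peq_refl (uword (ini a))) (peq_inv_l (rels := pi1rel C' T') (eplus (lE a)))).
    rewrite app_nil_r. auto.
Qed.

Lemma lE_ter a : ter (lE a) = lV (ter a). Proof. apply lE_ter_lam_edge_exists. Qed.

Lemma lE_composable a b : composable a b -> composable (lE a) (lE b).
Proof. unfold composable. intros H. rewrite lE_ini, lE_ter, H. reflexivity. Qed.

Lemma lE_cmp a b : composable a b -> lE (cmp a b) = cmp (lE a) (lE b).
Proof.
  intros Hab.
  assert (Hcomp : composable (X := D C T) (DE ([], a)) (DE (eplus b, b))).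
  { unfold composable. change (@ini (D C T)) with (@Dini Y C T).
    change (@ter (D C T)) with (@Dter Y C T).
    rewrite (Dini_cls T HC), (Dter_cls T HC), Hab.
    apply (coset_eq_peq HC (fun s => s)), peq_sym, (peq_inv_r (eplus b)). }
  assert (H := proj2 (proj2 HL) _ _ Hcomp).
  change (@cmp (D C T)) with (@Dcmp Y C T) in H. change (@cmp (D C' T')) with (@Dcmp Y' C' T') in H.
  rewrite (Dcmp_cls T HC _ _ (proj1 (proj1 HY a b Hab))) in H.
  rewrite L_edge, (proj1 (L_edge_base a)), L_edge in H.
  rewrite (Dcmp_cls T' HC' _ _ (proj1 (proj1 HY' _ _ (lE_composable Hab)))) in H.
  apply (coset_inj HC' (anchor := @ini Y')) in H. apply H.
Qed.

Definition lam_loc (x : Gel C) : Gel C' :=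
  choose (gone C' (lV (loc x))) (fun z => loc z = lV (loc x) /\ Peq' (gen z) (Lconj (inl x))).
Definition lam_edge (a : E Y) : Gel C' :=
  choose (gone C' (ter (lE a)))
    (fun z => loc z = ter (lE a) /\ Peq' (gen z ++ eplus (lE a)) (Lconj (inr a))).

Lemma lam_loc_spec x : loc (lam_loc x) = lV (loc x) /\ Peq' (gen (lam_loc x)) (Lconj (inl x)).
Proof. unfold lam_loc. apply choose_spec, lam_loc_exists. Qed.
Lemma lam_edge_spec a :
  loc (lam_edge a) = ter (lE a) /\ Peq' (gen (lam_edge a) ++ eplus (lE a)) (Lconj (inr a)).
Proof. unfold lam_edge. apply choose_spec, lE_ter_lam_edge_exists. Qed.

Lemma loc_lam_loc x : loc (lam_loc x) = lV (loc x). Proof. apply lam_loc_spec. Qed.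
Lemma loc_lam_edge a : loc (lam_edge a) = ter (lE a). Proof. apply lam_edge_spec. Qed.

Definition lmor : scwol_mor Y Y' := Smor lV lE.
Definition lam : cog_mor C C' := Cmor lam_loc lam_edge.

Notation Fl := (Flet lmor lam).

Lemma Flet_Lconj w : Peq' (wmap Fl w) (wmap Lconj w).
Proof. apply wmap_ext_peq. intros [g|a]; [apply lam_loc_spec | apply lam_edge_spec]. Qed.

Lemma wmap_Lconj u v w : is_wpath u v w -> Peq' (wmap Lconj w) (winv (uword u) ++ Lw w ++ uword v).
Proof.
  intros H. unfold Lconj. eapply peq_trans; [apply wmap_conj_map, H|]. cbv beta.
  rewrite winv_involutive.
  apply peq_app; [apply peq_refl|]. apply peq_app; [apply (wmap_hom_word Hhom) | apply peq_refl].
Qed.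

Lemma wmap_Flet_pi1 u v : Feq u v -> Peq' (wmap Fl u) (wmap Fl v).
Proof.
  intros H. eapply peq_trans; [apply Flet_Lconj|]. eapply peq_trans; [|apply peq_sym, Flet_Lconj].
  revert u v H. apply wmap_peq. intros l r H. apply (conj_map_FGrel HY HC); [exact H|].
  eapply peq_trans; [apply (wmap_hom_word Hhom)|].
  eapply peq_trans; [|apply peq_sym, (wmap_hom_word Hhom)].
  rewrite (hom_word_peq Lambda (peq_FG_pi1 T (peq_rel H))). apply peq_refl.
Qed.

Lemma is_wpath_wmap_Flet u v w : is_wpath u v w -> is_wpath (C := C') (lV u) (lV v) (wmap Fl w).
Proof.
  assert (Hx : forall x u m, is_wpath u m [(x, false)] -> is_wpath (C := C') (lV u) (lV m) (Fl x)).
  { intros [g|a] u0 m0 [H1 H2]; simpl.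
    - split; [rewrite loc_lam_loc|]; congruence.
    - simpl in H2. rewrite H1, <- H2, <- lE_ter, <- lE_ini, loc_lam_edge. auto. }
  revert u; induction w as [|[x b] w IH]; intros u H; [simpl in *; subst; reflexivity|].
  change ((x, b) :: w) with ([(x, b)] ++ w) in *. rewrite wmap_app.
  apply is_wpath_app_inv in H. destruct H as [m [H1 H2]].
  apply is_wpath_app with (lV m); [|apply IH, H2]. simpl. rewrite app_nil_r.
  destruct b; [|apply Hx, H1].
  apply is_wpath_winv, Hx. apply is_wpath_winv in H1. exact H1.
Qed.

Lemma Flet_conj a (x : Gel C) : loc x = ini a ->
  Feq' (wmap Fl (eplus a ++ gen x ++ eminus a))
       (gen (gmul (gmul (lam_edge a) (psi (lE a) (lam_loc x))) (ginv (lam_edge a)))).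
Proof.
  intros Hx.
  assert (HB : loc (lam_loc x) = ini (lE a)) by (rewrite loc_lam_loc, Hx, lE_ini; reflexivity).
  assert (HB' : loc (psi (lE a) (lam_loc x)) = loc (lam_edge a))
    by (rewrite (cog_loc_psi HC'), loc_lam_edge; auto).
  change (wmap Fl (eplus a ++ gen x ++ eminus a)) with
    ((gen (lam_edge a) ++ eplus (lE a)) ++ gen (lam_loc x)
     ++ winv (gen (lam_edge a) ++ eplus (lE a)) ++ []).
  rewrite app_nil_r, winv_app. normalize_app.
  apply peq_sym. eapply peq_trans.
  { apply peq_sym, gen_mul. rewrite (cog_loc_mul HC'), (cog_loc_inv HC'); auto. }
  eapply peq_trans; [apply peq_app; [apply peq_sym, gen_mul, eq_sym, HB' | apply (gen_inv HC')]|].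
  normalize_app.
  apply (peq_ctx [(inl (lam_edge a), false)] (winv (gen (lam_edge a)))
    (u := [(inl (psi (lE a) (lam_loc x)), false)])
    (v := [(inr (lE a), false); (inl (lam_loc x), false); (inr (lE a), true)])).
  apply peq_sym.
  eapply peq_trans; [apply (peq_app (eplus_gen (C := C') HB) (peq_refl (eminus (lE a))))|].
  apply (peq_ctx (gen (psi (lE a) (lam_loc x))) [] (peq_inv_r (rels := FGrel C') (eplus (lE a)))).
Qed.

Lemma Flet_eplus_eplus a b : composable a b ->
  Feq' (wmap Fl (eplus a ++ eplus b))
       (gen (gmul (gmul (lam_edge a) (psi (lE a) (lam_edge b))) (twist (lE a) (lE b)))
        ++ eplus (cmp (lE a) (lE b))).
Proof.
  intros Hab. assert (Hc := lE_composable Hab).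
  assert (HB : loc (lam_edge b) = ini (lE a)) by (rewrite loc_lam_edge; symmetry; exact Hc).
  assert (HB' : loc (psi (lE a) (lam_edge b)) = loc (lam_edge a))
    by (rewrite (cog_loc_psi HC'), loc_lam_edge; auto).
  assert (Hg : loc (twist (c := C') (lE a) (lE b)) = loc (lam_edge a))
    by (rewrite (cog_loc_twist HC'), loc_lam_edge; auto).
  change (wmap Fl (eplus a ++ eplus b)) with
    ((gen (lam_edge a) ++ eplus (lE a)) ++ (gen (lam_edge b) ++ eplus (lE b)) ++ []).
  rewrite app_nil_r. apply peq_sym. eapply peq_trans.
  { apply peq_app; [apply peq_sym, gen_mul | apply peq_refl]. rewrite (cog_loc_mul HC'); auto. }
  eapply peq_trans.
  { apply peq_app; [|apply peq_refl].
    apply peq_app; [apply peq_sym, gen_mul, eq_sym, HB' | apply peq_refl]. }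
  apply peq_sym. rewrite <- !app_assoc. apply peq_app; [apply peq_refl|].
  eapply peq_trans;
    [rewrite app_assoc; apply peq_app; [apply (eplus_gen (C := C') HB) | apply peq_refl]|].
  rewrite <- !app_assoc. apply peq_app; [apply peq_refl | apply (eplus_eplus C' Hc)].
Qed.

Lemma lam_loc_mul (x y : Gel C) : loc x = loc y -> lam_loc (gmul x y) = gmul (lam_loc x) (lam_loc y).
Proof.
  intros H. apply (gen_inj (lV s0) HY' HC' HT' HW' Hdev').
  - rewrite loc_lam_loc, (cog_loc_mul HC'), loc_lam_loc, (cog_loc_mul HC); auto.
    rewrite !loc_lam_loc, H. reflexivity.
  - change (gen (lam_loc (gmul x y))) with (wmap Fl (gen (gmul x y))).
    eapply peq_trans; [apply wmap_Flet_pi1, peq_sym, gen_mul, H|].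
    apply (peq_FG_pi1 T'), gen_mul. rewrite !loc_lam_loc, H. reflexivity.
Qed.

Lemma lam_psi a (x : Gel C) : loc x = ini a ->
  gmul (gmul (lam_edge a) (psi (lE a) (lam_loc x))) (ginv (lam_edge a)) = lam_loc (psi a x).
Proof.
  intros Hx.
  assert (HB' : loc (psi (lE a) (lam_loc x)) = loc (lam_edge a))
    by (rewrite (cog_loc_psi HC'), loc_lam_edge; [|rewrite loc_lam_loc, Hx, lE_ini]; reflexivity).
  apply (gen_inj (lV s0) HY' HC' HT' HW' Hdev').
  - assert (E1 : loc (gmul (lam_edge a) (psi (lE a) (lam_loc x))) = loc (lam_edge a))
      by (apply (cog_loc_mul HC'); symmetry; exact HB').
    rewrite loc_lam_loc, (cog_loc_psi HC Hx), <- lE_ter, <- loc_lam_edge.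
    rewrite (cog_loc_mul HC'), E1; [reflexivity | rewrite E1, (cog_loc_inv HC'); reflexivity].
  - eapply peq_trans; [apply (peq_FG_pi1 T'), peq_sym, Flet_conj, Hx|].
    change (gen (lam_loc (psi a x))) with (wmap Fl (gen (psi a x))).
    apply wmap_Flet_pi1, peq_sym, peq_rel. right; right. exists a, x. auto.
Qed.

Lemma lam_twist a b : composable a b ->
  gmul (lam_loc (twist a b)) (lam_edge (cmp a b)) =
  gmul (gmul (lam_edge a) (psi (lE a) (lam_edge b))) (twist (lE a) (lE b)).
Proof.
  intros Hab. assert (Hc := lE_composable Hab).
  assert (HB' : loc (psi (lE a) (lam_edge b)) = loc (lam_edge a))
    by (rewrite (cog_loc_psi HC'), loc_lam_edge;
        [|rewrite loc_lam_edge; symmetry; exact Hc]; reflexivity).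
  assert (Hl : loc (lam_loc (twist a b)) = loc (lam_edge (cmp a b))).
  { rewrite loc_lam_loc, loc_lam_edge, (cog_loc_twist HC Hab), lE_ter, (proj2 (proj1 HY a b Hab)).
    reflexivity. }
  apply (gen_inj (lV s0) HY' HC' HT' HW' Hdev').
  - assert (E1 : loc (gmul (lam_edge a) (psi (lE a) (lam_edge b))) = loc (lam_edge a))
      by (apply (cog_loc_mul HC'); symmetry; exact HB').
    rewrite (cog_loc_mul HC' Hl), loc_lam_loc, (cog_loc_twist HC Hab), <- lE_ter, <- loc_lam_edge.
    rewrite (cog_loc_mul HC'), E1; [reflexivity|].
    rewrite E1, (cog_loc_twist HC' Hc), loc_lam_edge. reflexivity.
  - apply peq_cancel_r with (eplus (lE (cmp a b))).
    eapply peq_trans; [apply peq_app; [apply (peq_FG_pi1 T'), peq_sym, gen_mul, Hl | apply peq_refl]|].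
    rewrite <- app_assoc.
    change (gen (lam_loc (twist a b)) ++ gen (lam_edge (cmp a b)) ++ eplus (lE (cmp a b)))
      with (wmap Fl (gen (twist a b) ++ eplus (cmp a b))).
    eapply peq_trans; [apply wmap_Flet_pi1, peq_sym, eplus_eplus, Hab|].
    rewrite lE_cmp by exact Hab. apply (peq_FG_pi1 T'), Flet_eplus_eplus, Hab.
Qed.

Lemma is_scwol_mor_lmor : is_scwol_mor lmor.
Proof. split; [exact lE_ini | split; [exact lE_ter | exact lE_cmp]]. Qed.

Lemma is_cog_mor_lam : is_cog_mor lmor lam.
Proof.
  split; [exact loc_lam_loc|]. split; [exact lam_loc_mul|].
  split; [exact loc_lam_edge|]. split; [exact lam_psi | exact lam_twist].
Qed.

Lemma wmap_Flet_peq u v : Feq u v -> Feq' (wmap Fl u) (wmap Fl v).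
Proof.
  apply wmap_peq. intros l r [[x [y [Hl [-> ->]]]]|[[a [b [Hab [-> ->]]]]|[a [x [Hx [-> ->]]]]]].
  - change (wmap Fl (gen (gmul x y))) with (gen (lam_loc (gmul x y)) ++ []).
    rewrite app_nil_r, lam_loc_mul by exact Hl. apply gen_mul. rewrite !loc_lam_loc, Hl. reflexivity.
  - change (wmap Fl (gen (twist a b) ++ eplus (cmp a b))) with
      (gen (lam_loc (twist a b)) ++ (gen (lam_edge (cmp a b)) ++ eplus (lE (cmp a b))) ++ []).
    rewrite app_nil_r. eapply peq_trans; [apply Flet_eplus_eplus, Hab|].
    rewrite <- lam_twist, <- lE_cmp, app_assoc by exact Hab.
    apply peq_app; [apply peq_sym, gen_mul | apply peq_refl].
    rewrite loc_lam_loc, loc_lam_edge, (cog_loc_twist HC Hab), lE_ter, (proj2 (proj1 HY a b Hab)).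
    reflexivity.
  - change (wmap Fl (gen (psi a x))) with (gen (lam_loc (psi a x)) ++ []).
    rewrite app_nil_r, <- lam_psi by exact Hx. apply peq_sym, Flet_conj, Hx.
Qed.

Lemma Lam_lam g : Lam lmor lam T T' s0 g = Lambda g.
Proof.
  unfold Lam. set (K := wmap (kappa_letter T s0) (rep g)).
  assert (HK : is_wpath s0 s0 K) by apply (is_wpath_wmap_kappa s0 HT HW).
  rewrite (kappa_choose_loop (s0 := lV s0) (Z := wmap Fl K) HY' HC' HT' HW').
  - rewrite <- (pgrp_cls_rep (Lambda g)). apply pgrp_cls_eq.
    eapply peq_trans; [apply Flet_Lconj|]. eapply peq_trans; [apply (wmap_Lconj HK)|].
    rewrite uword_base, app_nil_r. simpl.
    unfold K. rewrite (hom_word_peq Lambda (wmap_kappa_pi1 s0 HT HW (rep g))).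
    unfold hom_word. rewrite pgrp_cls_rep. apply peq_refl.
  - apply is_wpath_wmap_Flet, HK.
  - apply pgrp_cls_eq, wmap_Flet_peq, peq_sym, pgrp_rep_cls.
Qed.

Lemma ufun_uword s : Peq' (rep (ufun lmor lam T T' s0 s)) (uword s).
Proof.
  unfold ufun. set (pi := piw C T s0 s). set (pi' := piw C' T' (lV s0) (lV s)).
  rewrite (kappa_choose_loop (s0 := lV s0) (Z := wmap Fl pi ++ winv pi') HY' HC' HT' HW').
  - eapply peq_trans; [apply peq_sym, pgrp_rep_cls|].
    eapply peq_trans;
      [apply peq_app; [apply Flet_Lconj | apply peq_winv, (piw_trivial C' (lV s0) HT' HW')]|].
    simpl. rewrite app_nil_r. eapply peq_trans; [apply wmap_Lconj, (is_wpath_piw C s0 HT HW)|].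
    rewrite uword_base. simpl. unfold pi. rewrite (hom_word_peq Lambda (piw_trivial C s0 HT HW s)).
    generalize (peq_app (hom_word_nil Hhom) (peq_refl (uword s))). auto.
  - apply is_wpath_app with (lV s).
    + apply is_wpath_wmap_Flet, (is_wpath_piw C s0 HT HW).
    + apply is_wpath_winv, (is_wpath_piw C' (lV s0) HT' HW').
  - apply pgrp_cls_eq, peq_app.
    + eapply peq_trans; [apply peq_sym, pgrp_rep_cls|]. apply wmap_Flet_peq, peq_sym, pgrp_rep_cls.
    + eapply peq_trans; [apply peq_sym, pgrp_rep_cls|]. apply peq_winv, peq_sym, pgrp_rep_cls.
Qed.

Lemma LlamV_lam v : mV L v = LlamV lmor lam T T' s0 v.
Proof.
  rewrite (coset_of_rep (anchor := fun s => s) v) at 1. rewrite L_vertex. unfold LlamV.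
  apply (coset_eq_peq HC' (fun s => s)). eapply peq_trans; [|apply peq_sym, rep_pmul].
  rewrite Lam_lam. apply peq_app; [apply peq_refl | apply peq_sym, ufun_uword].
Qed.

Lemma LlamE_lam e : mE L e = LlamE lmor lam T T' s0 e.
Proof.
  rewrite (coset_of_rep (anchor := @ini Y) e) at 1. rewrite L_edge. unfold LlamE.
  apply (coset_eq_peq HC' (@ini Y')). eapply peq_trans; [|apply peq_sym, rep_pmul].
  rewrite Lam_lam. apply peq_app; [apply peq_refl | apply peq_sym, ufun_uword].
Qed.

End InducedMorphism.

Theorem mainTheorem6 (Y Y' : scwol) (C : cog Y) (C' : cog Y')
  (T : E Y -> Prop) (T' : E Y' -> Prop)
  (L : scwol_mor (D C T) (D C' T')) (Lambda : pi1 C T -> pi1 C' T')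
  (s0 : V Y) (s0' : V Y') :
  is_scwol Y -> is_scwol Y' -> connected Y -> connected Y' ->
  is_cog C -> is_cog C' -> developable C -> developable C' ->
  maximal_tree T -> maximal_tree T' ->
  is_scwol_mor L ->
  (forall g h, Lambda (pmul g h) = pmul (Lambda g) (Lambda h)) ->
  (forall g v, mV L (DactV g v) = DactV (Lambda g) (mV L v)) ->
  (forall g e, mE L (DactE g e) = DactE (Lambda g) (mE L e)) ->
  mV L (cls (Dvrel C T) ([], s0)) = cls (Dvrel C' T') ([], s0') ->
  exists (l : scwol_mor Y Y') (lam : cog_mor C C'),
    is_scwol_mor l /\ is_cog_mor l lam /\ mV l s0 = s0' /\
    (forall v, mV L v = LlamV l lam T T' s0 v) /\
    (forall e, mE L e = LlamE l lam T T' s0 e) /\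
    (forall g, Lambda g = Lam l lam T T' s0 g).
Proof.
  intros HY HY' Hc Hc' HC HC' _ Hdev' HT HT' HL Hhom HeqV HeqE Hbase.
  destruct (maximal_tree_spans HY Hc HT) as [W [HTW HW]].
  destruct (maximal_tree_spans HY' Hc' HT') as [W' [HTW' HW']].
  assert (Hs : lV L s0 = s0').
  { unfold lV. rewrite Hbase. apply (coset_rep T' HC' (fun s => s) [] s0'). }
  subst s0'.
  exists (lmor L), (lam L Lambda s0).
  split; [exact (is_scwol_mor_lmor HY HY' HC HC' HL Hhom HeqV HeqE Hbase)|].
  split; [exact (is_cog_mor_lam HY HY' HC HC' Hdev' HTW' HW' HL Hhom HeqV HeqE Hbase)|].
  split; [reflexivity|].
  split; [exact (LlamV_lam HY HY' HC HC' Hdev' HTW HW HTW' HW' HL Hhom HeqV HeqE Hbase)|].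
  split; [exact (LlamE_lam HY HY' HC HC' Hdev' HTW HW HTW' HW' HL Hhom HeqV HeqE Hbase)|].
  intros g. symmetry. exact (Lam_lam HY HY' HC HC' Hdev' HTW HW HTW' HW' HL Hhom HeqV HeqE Hbase g).
Qed.
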